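(* The functor $\mathbb{H}\colon 2\mathrm{Cat}\to\mathrm{DblCat}$ has a left adjoint $L\colon\mathrm{DblCat}\to 2\mathrm{Cat}$, and the adjunction $L\dashv\mathbb{H}$ is a Quillen pair, where $2\mathrm{Cat}$ carries the Lack model structure and $\mathrm{DblCat}$ carries the model structure right-induced along $(\mathbf{H},\mathcal{V})$ from two copies of the Lack model structure. Moreover, the counit $L\mathbb{H}\mathcal{A}\to\mathcal{A}$ is an isomorphism of 2-categories for every 2-category $\mathcal{A}$.
   Context: $\mathbb{H}\colon 2\mathrm{Cat}\to\mathrm{DblCat}$ sends a 2-category to the double category with the same objects, its morphisms as horizontal morphisms, only identity vertical morphisms, and its 2-cells as squares. $\mathbf{H}$ sends a double category to its underlying horizontal 2-category (objects, horizontal morphisms, squares with identity vertical boundaries as 2-cells). $\mathcal{V}\mathbb{A}$ is the 2-category with vertical morphisms of $\mathbb{A}$ as objects, squares as morphisms, and as 2-cells from $\alpha\colon(u\,{}^{a}_{b}\,v)$ to $\beta\colon(u\,{}^{c}_{d}\,v)$ pairs of squares with identity vertical boundaries $\sigma_0\colon a\Rightarrow c$, $\sigma_1\colon b\Rightarrow d$ with $\sigma_0$ on top of $\beta$ equal to $\alpha$ on top of $\sigma_1$. The Lack model structure on $2\mathrm{Cat}$ has biequivalences as weak equivalences and Lack fibrations as fibrations (2-functors $G$ for which equivalences $b\colon B\to GC$ lift to equivalences $a$ with $Ga=b$, and invertible 2-cells $\beta\colon b\cong Gc$ lift to invertible 2-cells $\alpha\colon a\cong c$ with $G\alpha=\beta$).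 The model structure on $\mathrm{DblCat}$ has as weak equivalences (resp.\ fibrations) the double functors $F$ with $\mathbf{H}F$ and $\mathcal{V}F$ biequivalences (resp.\ Lack fibrations). *)

(* Strict 2-categories and strict double categories are presented
   "non-dependently": each sort of cells is a type equipped with boundary
   maps, and composition operations are total functions whose values are only
   constrained (by the axioms) on composable arguments. *)
From Stdlib Require Import ClassicalEpsilon.
Set Implicit Arguments.
Unset Strict Implicit.

Record TwoCat : Type := {
  ob : Type; hom : Type; cell : Type;
  dom : hom -> ob; cod : hom -> ob;
  src : cell -> hom; tgt : cell -> hom;
  id1 : ob -> hom;
  comp1 : hom -> hom -> hom;                   (* comp1 f g = g o f (diagrammatic) *)
  id2 : hom -> cell;
  vcomp : cell -> cell -> cell;                (* vcomp x y : src x => tgt y *)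
  hcomp : cell -> cell -> cell }.              (* whiskering/horizontal composition, diagrammatic *)

Record is_twocat (C : TwoCat) : Prop := {
  tc_id1_dom : forall a : ob C, dom (id1 a) = a;
  tc_id1_cod : forall a : ob C, cod (id1 a) = a;
  tc_comp1_dom : forall f g : hom C, cod f = dom g -> dom (comp1 f g) = dom f;
  tc_comp1_cod : forall f g : hom C, cod f = dom g -> cod (comp1 f g) = cod g;
  tc_comp1_id_l : forall f : hom C, comp1 (id1 (dom f)) f = f;
  tc_comp1_id_r : forall f : hom C, comp1 f (id1 (cod f)) = f;
  tc_comp1_assoc : forall f g h : hom C, cod f = dom g -> cod g = dom h ->
      comp1 (comp1 f g) h = comp1 f (comp1 g h);
  tc_par_dom : forall x : cell C, dom (src x) = dom (tgt x);
  tc_par_cod : forall x : cell C, cod (src x) = cod (tgt x);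
  tc_id2_src : forall f : hom C, src (id2 f) = f;
  tc_id2_tgt : forall f : hom C, tgt (id2 f) = f;
  tc_vcomp_src : forall x y : cell C, tgt x = src y -> src (vcomp x y) = src x;
  tc_vcomp_tgt : forall x y : cell C, tgt x = src y -> tgt (vcomp x y) = tgt y;
  tc_vcomp_id_l : forall x : cell C, vcomp (id2 (src x)) x = x;
  tc_vcomp_id_r : forall x : cell C, vcomp x (id2 (tgt x)) = x;
  tc_vcomp_assoc : forall x y z : cell C, tgt x = src y -> tgt y = src z ->
      vcomp (vcomp x y) z = vcomp x (vcomp y z);
  tc_hcomp_src : forall x y : cell C, cod (src x) = dom (src y) ->
      src (hcomp x y) = comp1 (src x) (src y);
  tc_hcomp_tgt : forall x y : cell C, cod (src x) = dom (src y) ->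
      tgt (hcomp x y) = comp1 (tgt x) (tgt y);
  tc_hcomp_id_l : forall x : cell C, hcomp (id2 (id1 (dom (src x)))) x = x;
  tc_hcomp_id_r : forall x : cell C, hcomp x (id2 (id1 (cod (src x)))) = x;
  tc_hcomp_assoc : forall x y z : cell C, cod (src x) = dom (src y) ->
      cod (src y) = dom (src z) -> hcomp (hcomp x y) z = hcomp x (hcomp y z);
  tc_hcomp_id2 : forall f g : hom C, cod f = dom g ->
      hcomp (id2 f) (id2 g) = id2 (comp1 f g);
  tc_interchange : forall x y z w : cell C, tgt x = src y -> tgt z = src w ->
      cod (src x) = dom (src z) ->
      hcomp (vcomp x y) (vcomp z w) = vcomp (hcomp x z) (hcomp y w) }.

Record TwoFun (A B : TwoCat) : Type := {
  F_ob : ob A -> ob B; F_hom : hom A -> hom B; F_cell : cell A -> cell B }.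

Record is_twofun (A B : TwoCat) (F : TwoFun A B) : Prop := {
  tf_dom : forall f : hom A, dom (F_hom F f) = F_ob F (dom f);
  tf_cod : forall f : hom A, cod (F_hom F f) = F_ob F (cod f);
  tf_src : forall x : cell A, src (F_cell F x) = F_hom F (src x);
  tf_tgt : forall x : cell A, tgt (F_cell F x) = F_hom F (tgt x);
  tf_id1 : forall a : ob A, F_hom F (id1 a) = id1 (F_ob F a);
  tf_comp1 : forall f g : hom A, cod f = dom g ->
      F_hom F (comp1 f g) = comp1 (F_hom F f) (F_hom F g);
  tf_id2 : forall f : hom A, F_cell F (id2 f) = id2 (F_hom F f);
  tf_vcomp : forall x y : cell A, tgt x = src y ->
      F_cell F (vcomp x y) = vcomp (F_cell F x) (F_cell F y);
  tf_hcomp : forall x y : cell A, cod (src x) = dom (src y) ->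
      F_cell F (hcomp x y) = hcomp (F_cell F x) (F_cell F y) }.

Definition twofun_eq (A B : TwoCat) (F G : TwoFun A B) : Prop :=
  (forall a, F_ob F a = F_ob G a) /\ (forall f, F_hom F f = F_hom G f) /\
  (forall x, F_cell F x = F_cell G x).

Definition twocat_iso (A B : TwoCat) (F : TwoFun A B) : Prop :=
  exists G : TwoFun B A, is_twofun G /\
    (forall a, F_ob G (F_ob F a) = a) /\ (forall b, F_ob F (F_ob G b) = b) /\
    (forall f, F_hom G (F_hom F f) = f) /\ (forall g, F_hom F (F_hom G g) = g) /\
    (forall x, F_cell G (F_cell F x) = x) /\ (forall y, F_cell F (F_cell G y) = y).

Definition iso2 (C : TwoCat) (x : cell C) : Prop :=
  exists y : cell C, src y = tgt x /\ tgt y = src x /\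
    vcomp x y = id2 (src x) /\ vcomp y x = id2 (tgt x).

Definition is_equiv (C : TwoCat) (f : hom C) : Prop :=
  exists g : hom C, dom g = cod f /\ cod g = dom f /\
    (exists x : cell C, src x = comp1 f g /\ tgt x = id1 (dom f) /\ iso2 x) /\
    (exists y : cell C, src y = comp1 g f /\ tgt y = id1 (cod f) /\ iso2 y).

Definition biequiv (A B : TwoCat) (F : TwoFun A B) : Prop :=
  (forall b : ob B, exists (a : ob A) (e : hom B),
      dom e = F_ob F a /\ cod e = b /\ is_equiv e) /\
  (forall (a a' : ob A) (g : hom B), dom g = F_ob F a -> cod g = F_ob F a' ->
      exists (f : hom A) (x : cell B), dom f = a /\ cod f = a' /\
        src x = F_hom F f /\ tgt x = g /\ iso2 x) /\
  (forall (f f' : hom A) (y : cell B), dom f = dom f' -> cod f = cod f' ->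
      src y = F_hom F f -> tgt y = F_hom F f' ->
      exists x : cell A, (src x = f /\ tgt x = f' /\ F_cell F x = y) /\
        forall x' : cell A, src x' = f -> tgt x' = f' -> F_cell F x' = y -> x' = x).

Definition lack_fib (A C : TwoCat) (G : TwoFun A C) : Prop :=
  (forall (c : ob A) (b : hom C), cod b = F_ob G c -> is_equiv b ->
      exists a : hom A, cod a = c /\ is_equiv a /\ F_hom G a = b) /\
  (forall (c : hom A) (beta : cell C), tgt beta = F_hom G c -> iso2 beta ->
      exists alpha : cell A, tgt alpha = c /\ iso2 alpha /\ F_cell G alpha = beta).

Record DblCat : Type := {
  dob : Type; hhom : Type; vhom : Type; sq : Type;
  hdom : hhom -> dob; hcod : hhom -> dob;
  vdom : vhom -> dob; vcod : vhom -> dob;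
  top : sq -> hhom; bot : sq -> hhom; lft : sq -> vhom; rgt : sq -> vhom;
  hid : dob -> hhom; hcomp1 : hhom -> hhom -> hhom;
  vid : dob -> vhom; vcomp1 : vhom -> vhom -> vhom;
  sqidh : hhom -> sq;     (* identity square on a horizontal morphism (unit for sqv) *)
  sqidv : vhom -> sq;     (* identity square on a vertical morphism (unit for sqh) *)
  sqh : sq -> sq -> sq;   (* horizontal composition: x to the left of y *)
  sqv : sq -> sq -> sq }. (* vertical composition: x on top of y *)

Record is_dblcat (D : DblCat) : Prop := {
  dc_hid_dom : forall a : dob D, hdom (hid a) = a;
  dc_hid_cod : forall a : dob D, hcod (hid a) = a;
  dc_hcomp1_dom : forall f g : hhom D, hcod f = hdom g -> hdom (hcomp1 f g) = hdom f;
  dc_hcomp1_cod : forall f g : hhom D, hcod f = hdom g -> hcod (hcomp1 f g) = hcod g;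
  dc_hcomp1_id_l : forall f : hhom D, hcomp1 (hid (hdom f)) f = f;
  dc_hcomp1_id_r : forall f : hhom D, hcomp1 f (hid (hcod f)) = f;
  dc_hcomp1_assoc : forall f g h : hhom D, hcod f = hdom g -> hcod g = hdom h ->
      hcomp1 (hcomp1 f g) h = hcomp1 f (hcomp1 g h);
  dc_vid_dom : forall a : dob D, vdom (vid a) = a;
  dc_vid_cod : forall a : dob D, vcod (vid a) = a;
  dc_vcomp1_dom : forall u v : vhom D, vcod u = vdom v -> vdom (vcomp1 u v) = vdom u;
  dc_vcomp1_cod : forall u v : vhom D, vcod u = vdom v -> vcod (vcomp1 u v) = vcod v;
  dc_vcomp1_id_l : forall u : vhom D, vcomp1 (vid (vdom u)) u = u;
  dc_vcomp1_id_r : forall u : vhom D, vcomp1 u (vid (vcod u)) = u;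
  dc_vcomp1_assoc : forall u v w : vhom D, vcod u = vdom v -> vcod v = vdom w ->
      vcomp1 (vcomp1 u v) w = vcomp1 u (vcomp1 v w);
  dc_corner_tl : forall x : sq D, hdom (top x) = vdom (lft x);
  dc_corner_tr : forall x : sq D, hcod (top x) = vdom (rgt x);
  dc_corner_bl : forall x : sq D, hdom (bot x) = vcod (lft x);
  dc_corner_br : forall x : sq D, hcod (bot x) = vcod (rgt x);
  dc_sqidh_top : forall f : hhom D, top (sqidh f) = f;
  dc_sqidh_bot : forall f : hhom D, bot (sqidh f) = f;
  dc_sqidh_lft : forall f : hhom D, lft (sqidh f) = vid (hdom f);
  dc_sqidh_rgt : forall f : hhom D, rgt (sqidh f) = vid (hcod f);
  dc_sqidv_lft : forall u : vhom D, lft (sqidv u) = u;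
  dc_sqidv_rgt : forall u : vhom D, rgt (sqidv u) = u;
  dc_sqidv_top : forall u : vhom D, top (sqidv u) = hid (vdom u);
  dc_sqidv_bot : forall u : vhom D, bot (sqidv u) = hid (vcod u);
  dc_sqh_lft : forall x y : sq D, rgt x = lft y -> lft (sqh x y) = lft x;
  dc_sqh_rgt : forall x y : sq D, rgt x = lft y -> rgt (sqh x y) = rgt y;
  dc_sqh_top : forall x y : sq D, rgt x = lft y -> top (sqh x y) = hcomp1 (top x) (top y);
  dc_sqh_bot : forall x y : sq D, rgt x = lft y -> bot (sqh x y) = hcomp1 (bot x) (bot y);
  dc_sqv_top : forall x y : sq D, bot x = top y -> top (sqv x y) = top x;
  dc_sqv_bot : forall x y : sq D, bot x = top y -> bot (sqv x y) = bot y;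
  dc_sqv_lft : forall x y : sq D, bot x = top y -> lft (sqv x y) = vcomp1 (lft x) (lft y);
  dc_sqv_rgt : forall x y : sq D, bot x = top y -> rgt (sqv x y) = vcomp1 (rgt x) (rgt y);
  dc_sqh_id_l : forall x : sq D, sqh (sqidv (lft x)) x = x;
  dc_sqh_id_r : forall x : sq D, sqh x (sqidv (rgt x)) = x;
  dc_sqh_assoc : forall x y z : sq D, rgt x = lft y -> rgt y = lft z ->
      sqh (sqh x y) z = sqh x (sqh y z);
  dc_sqv_id_l : forall x : sq D, sqv (sqidh (top x)) x = x;
  dc_sqv_id_r : forall x : sq D, sqv x (sqidh (bot x)) = x;
  dc_sqv_assoc : forall x y z : sq D, bot x = top y -> bot y = top z ->
      sqv (sqv x y) z = sqv x (sqv y z);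
  dc_interchange : forall x y z w : sq D, rgt x = lft y -> rgt z = lft w ->
      bot x = top z -> bot y = top w ->
      sqv (sqh x y) (sqh z w) = sqh (sqv x z) (sqv y w);
  dc_sqh_sqidh : forall f g : hhom D, hcod f = hdom g ->
      sqh (sqidh f) (sqidh g) = sqidh (hcomp1 f g);
  dc_sqv_sqidv : forall u v : vhom D, vcod u = vdom v ->
      sqv (sqidv u) (sqidv v) = sqidv (vcomp1 u v);
  dc_sqidh_sqidv : forall a : dob D, sqidh (hid a) = sqidv (vid a) }.

Record DblFun (D E : DblCat) : Type := {
  G_ob : dob D -> dob E; G_hh : hhom D -> hhom E;
  G_vh : vhom D -> vhom E; G_sq : sq D -> sq E }.

Record is_dblfun (D E : DblCat) (G : DblFun D E) : Prop := {
  df_hdom : forall f, hdom (G_hh G f) = G_ob G (hdom f);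
  df_hcod : forall f, hcod (G_hh G f) = G_ob G (hcod f);
  df_vdom : forall u, vdom (G_vh G u) = G_ob G (vdom u);
  df_vcod : forall u, vcod (G_vh G u) = G_ob G (vcod u);
  df_top : forall x, top (G_sq G x) = G_hh G (top x);
  df_bot : forall x, bot (G_sq G x) = G_hh G (bot x);
  df_lft : forall x, lft (G_sq G x) = G_vh G (lft x);
  df_rgt : forall x, rgt (G_sq G x) = G_vh G (rgt x);
  df_hid : forall a, G_hh G (hid a) = hid (G_ob G a);
  df_vid : forall a, G_vh G (vid a) = vid (G_ob G a);
  df_hcomp1 : forall f g, hcod f = hdom g -> G_hh G (hcomp1 f g) = hcomp1 (G_hh G f) (G_hh G g);
  df_vcomp1 : forall u v, vcod u = vdom v -> G_vh G (vcomp1 u v) = vcomp1 (G_vh G u) (G_vh G v);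
  df_sqidh : forall f, G_sq G (sqidh f) = sqidh (G_hh G f);
  df_sqidv : forall u, G_sq G (sqidv u) = sqidv (G_vh G u);
  df_sqh : forall x y, rgt x = lft y -> G_sq G (sqh x y) = sqh (G_sq G x) (G_sq G y);
  df_sqv : forall x y, bot x = top y -> G_sq G (sqv x y) = sqv (G_sq G x) (G_sq G y) }.

Definition dblfun_eq (D E : DblCat) (F G : DblFun D E) : Prop :=
  (forall a, G_ob F a = G_ob G a) /\ (forall f, G_hh F f = G_hh G f) /\
  (forall u, G_vh F u = G_vh G u) /\ (forall x, G_sq F x = G_sq G x).

Definition dblfun_comp (D E F : DblCat) (G : DblFun E F) (H : DblFun D E) : DblFun D F :=
  {| G_ob a := G_ob G (G_ob H a); G_hh f := G_hh G (G_hh H f);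
     G_vh u := G_vh G (G_vh H u); G_sq x := G_sq G (G_sq H x) |}.

Definition dblfun_id (D : DblCat) : DblFun D D :=
  {| G_ob a := a; G_hh f := f; G_vh u := u; G_sq x := x |}.

(* vertical morphisms are indexed by objects: the only one on a is the identity *)
Definition HH (A : TwoCat) : DblCat :=
  {| dob := ob A; hhom := hom A; vhom := ob A; sq := cell A;
     hdom := @dom A; hcod := @cod A; vdom a := a; vcod a := a;
     top := @src A; bot := @tgt A;
     lft x := dom (src x); rgt x := cod (src x);
     hid := @id1 A; hcomp1 := @comp1 A;
     vid a := a; vcomp1 a _ := a;
     sqidh := @id2 A; sqidv a := id2 (id1 a);
     sqh := @hcomp A; sqv := @vcomp A |}.

Definition HHf (A B : TwoCat) (F : TwoFun A B) : DblFun (HH A) (HH B) :=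
  @Build_DblFun (HH A) (HH B) (F_ob F) (F_hom F) (F_ob F) (F_cell F).

(* choice-based restriction to a subtype, used for composites (which land in
   the subtype whenever the arguments are composable, by the axioms) *)
Definition restrict (X : Type) (P : X -> Prop) (x : X) (d : {y : X | P y}) : {y : X | P y} :=
  match excluded_middle_informative (P x) with
  | left p => exist P x p
  | right _ => d
  end.

Definition globular (D : DblCat) (x : sq D) : Prop :=
  lft x = vid (vdom (lft x)) /\ rgt x = vid (vdom (rgt x)).

Lemma globular_sqidh (D : DblCat) (HD : is_dblcat D) (f : hhom D) : globular (sqidh f).
Proof.
  unfold globular. rewrite (dc_sqidh_lft HD), (dc_sqidh_rgt HD), !(dc_vid_dom HD).
  split; reflexivity.
Qed.

Definition Hor_id2 (D : DblCat) (HD : is_dblcat D) (f : hhom D) : {x : sq D | globular x} :=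
  exist (@globular D) (sqidh f) (globular_sqidh HD f).

Definition Hor (D : DblCat) (HD : is_dblcat D) : TwoCat :=
  {| ob := dob D; hom := hhom D; cell := {x : sq D | globular x};
     dom := @hdom D; cod := @hcod D;
     src x := top (proj1_sig x); tgt x := bot (proj1_sig x);
     id1 := @hid D; comp1 := @hcomp1 D;
     id2 := Hor_id2 HD;
     vcomp x y := @restrict _ (@globular D) (sqv (proj1_sig x) (proj1_sig y)) x;
     hcomp x y := @restrict _ (@globular D) (sqh (proj1_sig x) (proj1_sig y)) x |}.

Definition Horf (D E : DblCat) (HD : is_dblcat D) (HE : is_dblcat E) (G : DblFun D E)
  : TwoFun (Hor HD) (Hor HE) :=
  @Build_TwoFun (Hor HD) (Hor HE) (G_ob G) (G_hh G)
     (fun x => @restrict _ (@globular E) (G_sq G (proj1_sig x))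
                   (Hor_id2 HE (G_hh G (top (proj1_sig x))))).

(* 2-cells of V D : (s0, s1) from the square a to the square b *)
Record VQ (D : DblCat) : Type := mkVQ { vs0 : sq D; vs1 : sq D; va : sq D; vb : sq D }.

Definition V2 (D : DblCat) (q : VQ D) : Prop :=
  lft (va q) = lft (vb q) /\ rgt (va q) = rgt (vb q) /\
  globular (vs0 q) /\ globular (vs1 q) /\
  top (vs0 q) = top (va q) /\ bot (vs0 q) = top (vb q) /\
  top (vs1 q) = bot (va q) /\ bot (vs1 q) = bot (vb q) /\
  sqv (vs0 q) (vb q) = sqv (va q) (vs1 q).

Lemma V2_id (D : DblCat) (HD : is_dblcat D) (a : sq D) :
  V2 (mkVQ (sqidh (top a)) (sqidh (bot a)) a a).
Proof.
  unfold V2; simpl.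
  repeat split; try apply globular_sqidh; try assumption;
    try apply (dc_sqidh_top HD); try apply (dc_sqidh_bot HD).
  rewrite (dc_sqv_id_l HD), (dc_sqv_id_r HD). reflexivity.
Qed.

Definition Ver_id2 (D : DblCat) (HD : is_dblcat D) (a : sq D) : {q : VQ D | V2 q} :=
  exist (@V2 D) (mkVQ (sqidh (top a)) (sqidh (bot a)) a a) (V2_id HD a).

Definition Ver (D : DblCat) (HD : is_dblcat D) : TwoCat :=
  {| ob := vhom D; hom := sq D; cell := {q : VQ D | V2 q};
     dom := @lft D; cod := @rgt D;
     src q := va (proj1_sig q); tgt q := vb (proj1_sig q);
     id1 := @sqidv D; comp1 := @sqh D;
     id2 := Ver_id2 HD;
     vcomp x y := @restrict _ (@V2 D)
        (mkVQ (sqv (vs0 (proj1_sig x)) (vs0 (proj1_sig y)))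
              (sqv (vs1 (proj1_sig x)) (vs1 (proj1_sig y)))
              (va (proj1_sig x)) (vb (proj1_sig y))) x;
     hcomp x y := @restrict _ (@V2 D)
        (mkVQ (sqh (vs0 (proj1_sig x)) (vs0 (proj1_sig y)))
              (sqh (vs1 (proj1_sig x)) (vs1 (proj1_sig y)))
              (sqh (va (proj1_sig x)) (va (proj1_sig y)))
              (sqh (vb (proj1_sig x)) (vb (proj1_sig y)))) x |}.

Definition Verf (D E : DblCat) (HD : is_dblcat D) (HE : is_dblcat E) (G : DblFun D E)
  : TwoFun (Ver HD) (Ver HE) :=
  @Build_TwoFun (Ver HD) (Ver HE) (G_vh G) (G_sq G)
     (fun q => @restrict _ (@V2 E)
        (mkVQ (G_sq G (vs0 (proj1_sig q))) (G_sq G (vs1 (proj1_sig q)))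
              (G_sq G (va (proj1_sig q))) (G_sq G (vb (proj1_sig q))))
        (Ver_id2 HE (G_sq G (va (proj1_sig q))))).

Definition dbl_we (D E : DblCat) (G : DblFun D E) : Prop :=
  forall (HD : is_dblcat D) (HE : is_dblcat E),
    biequiv (Horf HD HE G) /\ biequiv (Verf HD HE G).

Definition dbl_fib (D E : DblCat) (G : DblFun D E) : Prop :=
  forall (HD : is_dblcat D) (HE : is_dblcat E),
    lack_fib (Horf HD HE G) /\ lack_fib (Verf HD HE G).

From Stdlib Require Import ClassicalEpsilon FunctionalExtensionality PropExtensionality.
From Stdlib Require Import ProofIrrelevance.
Set Implicit Arguments.
Unset Strict Implicit.

(* L D is the 2-category freely generated by the double category D: its objects, 1-cells
   and 2-cells are formal terms (generators coming from D, identities, composites) modulo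
   the relation "equal under every interpretation", where an interpretation (a model of D)
   is a 2-category B together with a double functor D -> HH B.  Since equality of terms is
   semantic, each 2-category axiom holds in L D because it holds in every model; evaluation
   in a model is a 2-functor L D -> B extending the given double functor (existence of the
   universal arrow), and it is the only one by induction on terms (uniqueness).  For
   D = HH A, the unit eta read as a 2-functor A -> L (HH A) inverts the counit.

   For the Quillen property we show that HH preserves fibrations and trivial fibrations.
   The horizontal 2-category of HH A is A itself (all squares are globular).  In the
   vertical 2-category V (HH A), 1-cells are 2-cells of A, 2-cells are commuting pairs of
   2-cells, and a 1-cell α is an equivalence iff α is invertible and its target is an
   equivalence of A; with this description the lifting and biequivalence properties of
   V (HH F) follow from those of F. *)

(* Quotient of a type by a partial equivalence relation R: equivalence classes of the
   elements x with R x x, represented as the predicates R x. *)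
Definition PerQuot (X : Type) (R : X -> X -> Prop) : Type :=
  {P : X -> Prop | exists x, R x x /\ P = R x}.

Definition qrep (X : Type) (R : X -> X -> Prop) (q : PerQuot R) : X :=
  proj1_sig (constructive_indefinite_description _ (proj2_sig q)).

Lemma qrep_spec (X : Type) (R : X -> X -> Prop) (q : PerQuot R) :
  R (qrep q) (qrep q) /\ proj1_sig q = R (qrep q).
Proof. unfold qrep. destruct (constructive_indefinite_description _ _) as [x Hx]. exact Hx. Qed.

Definition qcl (X : Type) (R : X -> X -> Prop) (x : X) (H : R x x) : PerQuot R :=
  exist _ (R x) (ex_intro _ x (conj H eq_refl)).

(* the class of x if x is in the domain of R, and the default class d otherwise; this is
   how partially defined operations (composites) are made total *)
Definition qcl_or (X : Type) (R : X -> X -> Prop) (x : X) (d : PerQuot R) : PerQuot R :=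
  match excluded_middle_informative (R x x) with left H => @qcl _ R x H | right _ => d end.

Lemma qcl_or_eq (X : Type) (R : X -> X -> Prop) x d (H : R x x) : qcl_or x d = @qcl _ R x H.
Proof.
  unfold qcl_or. destruct (excluded_middle_informative _) as [H'|n].
  - f_equal. apply proof_irrelevance.
  - contradiction.
Qed.

Section PerQuotient.
Variable X : Type.
Variable R : X -> X -> Prop.
Hypothesis R_sym : forall x y, R x y -> R y x.
Hypothesis R_trans : forall x y z, R x y -> R y z -> R x z.

Lemma pquot_eq (p q : PerQuot R) : proj1_sig p = proj1_sig q -> p = q.
Proof. destruct p, q; simpl; intros ->. f_equal. apply proof_irrelevance. Qed.

Lemma per_class_eq x y : R x y -> R x = R y.
Proof.
  intro H. apply functional_extensionality; intro z. apply propositional_extensionality.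
  split; intro; eauto.
Qed.

Lemma qcl_eq x y Hx Hy : R x y -> @qcl _ R x Hx = @qcl _ R y Hy.
Proof. intro H. apply pquot_eq. simpl. apply per_class_eq; auto. Qed.

Lemma qcl_rep q H : @qcl _ R (qrep q) H = q.
Proof. apply pquot_eq. simpl. symmetry. apply (qrep_spec q). Qed.

Lemma qcl_inj x y Hx Hy : @qcl _ R x Hx = @qcl _ R y Hy -> R x y.
Proof.
  intro E. apply (f_equal (@proj1_sig _ _)) in E. simpl in E. rewrite E. exact Hy.
Qed.

Lemma qrep_cl x H : R (qrep (@qcl _ R x H)) x.
Proof.
  destruct (qrep_spec (@qcl _ R x H)) as [H1 H2]. simpl in H2. rewrite <- H2. exact H.
Qed.

Lemma pquot_ext (p q : PerQuot R) : R (qrep p) (qrep q) -> p = q.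
Proof.
  intro H.
  rewrite <- (@qcl_rep p (proj1 (qrep_spec p))), <- (@qcl_rep q (proj1 (qrep_spec q))).
  apply qcl_eq. exact H.
Qed.
End PerQuotient.

Record Model (D : DblCat) : Type := mkModel {
  mcat : TwoCat; mfun : DblFun D (HH mcat);
  mcat_ok : is_twocat mcat; mfun_ok : is_dblfun mfun }.

Definition gob (D : DblCat) (M : Model D) (a : dob D) : ob (mcat M) := G_ob (mfun M) a.
Definition ghh (D : DblCat) (M : Model D) (f : hhom D) : hom (mcat M) := G_hh (mfun M) f.
Definition gvh (D : DblCat) (M : Model D) (u : vhom D) : ob (mcat M) := G_vh (mfun M) u.
Definition gsq (D : DblCat) (M : Model D) (x : sq D) : cell (mcat M) := G_sq (mfun M) x.

(* The double functor axioms of a model, read in the 2-category of the model; since the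
   only vertical morphisms of HH B are identities, a vertical morphism u of D is sent
   to the object of its domain (and of its codomain). *)
Section ModelFacts.
Variable D : DblCat.
Variable M : Model D.
Lemma m_hdom f : dom (ghh M f) = gob M (hdom f). Proof. apply (df_hdom (mfun_ok M)). Qed.
Lemma m_hcod f : cod (ghh M f) = gob M (hcod f). Proof. apply (df_hcod (mfun_ok M)). Qed.
Lemma m_vdom u : gvh M u = gob M (vdom u). Proof. apply (df_vdom (mfun_ok M)). Qed.
Lemma m_vcod u : gvh M u = gob M (vcod u). Proof. apply (df_vcod (mfun_ok M)). Qed.
Lemma m_top x : src (gsq M x) = ghh M (top x). Proof. apply (df_top (mfun_ok M)). Qed.
Lemma m_bot x : tgt (gsq M x) = ghh M (bot x). Proof. apply (df_bot (mfun_ok M)). Qed.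
Lemma m_lft x : dom (src (gsq M x)) = gvh M (lft x). Proof. apply (df_lft (mfun_ok M)). Qed.
Lemma m_rgt x : cod (src (gsq M x)) = gvh M (rgt x). Proof. apply (df_rgt (mfun_ok M)). Qed.
Lemma m_hid a : ghh M (hid a) = id1 (gob M a). Proof. apply (df_hid (mfun_ok M)). Qed.
Lemma m_vid a : gvh M (vid a) = gob M a. Proof. apply (df_vid (mfun_ok M)). Qed.
Lemma m_hcomp1 f g : hcod f = hdom g -> ghh M (hcomp1 f g) = comp1 (ghh M f) (ghh M g).
Proof. apply (df_hcomp1 (mfun_ok M)). Qed.
Lemma m_vcomp1 u v : vcod u = vdom v -> gvh M (vcomp1 u v) = gvh M u.
Proof. apply (df_vcomp1 (mfun_ok M)). Qed.
Lemma m_sqidh f : gsq M (sqidh f) = id2 (ghh M f). Proof. apply (df_sqidh (mfun_ok M)). Qed.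
Lemma m_sqidv u : gsq M (sqidv u) = id2 (id1 (gvh M u)). Proof. apply (df_sqidv (mfun_ok M)). Qed.
Lemma m_sqh x y : rgt x = lft y -> gsq M (sqh x y) = hcomp (gsq M x) (gsq M y).
Proof. apply (df_sqh (mfun_ok M)). Qed.
Lemma m_sqv x y : bot x = top y -> gsq M (sqv x y) = vcomp (gsq M x) (gsq M y).
Proof. apply (df_sqv (mfun_ok M)). Qed.
End ModelFacts.

Section Terms.
Variable D : DblCat.

Inductive hterm : Type :=
  | tgen (f : hhom D)
  | tid (a : dob D)
  | tcomp (t s : hterm).         (* composite, diagrammatic order *)

Inductive cterm : Type :=
  | csq (x : sq D)
  | cid (t : hterm)
  | cvcomp (p q : cterm)
  | chcomp (p q : cterm).

Fixpoint dom1 (t : hterm) : dob D :=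
  match t with tgen f => hdom f | tid a => a | tcomp t _ => dom1 t end.
Fixpoint cod1 (t : hterm) : dob D :=
  match t with tgen f => hcod f | tid a => a | tcomp _ s => cod1 s end.
Fixpoint src2 (p : cterm) : hterm :=
  match p with
  | csq x => tgen (top x) | cid t => t
  | cvcomp p _ => src2 p | chcomp p q => tcomp (src2 p) (src2 q) end.
Fixpoint tgt2 (p : cterm) : hterm :=
  match p with
  | csq x => tgen (bot x) | cid t => t
  | cvcomp _ q => tgt2 q | chcomp p q => tcomp (tgt2 p) (tgt2 q) end.

Fixpoint eval1 (M : Model D) (t : hterm) : hom (mcat M) :=
  match t with
  | tgen f => ghh M f | tid a => id1 (gob M a)
  | tcomp t s => comp1 (eval1 M t) (eval1 M s) end.
Fixpoint eval2 (M : Model D) (p : cterm) : cell (mcat M) :=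
  match p with
  | csq x => gsq M x | cid t => id2 (eval1 M t)
  | cvcomp p q => vcomp (eval2 M p) (eval2 M q)
  | chcomp p q => hcomp (eval2 M p) (eval2 M q) end.

Definition same_ob (a b : dob D) : Prop := forall M : Model D, gob M a = gob M b.

Fixpoint wf1 (t : hterm) : Prop :=
  match t with tcomp t s => wf1 t /\ wf1 s /\ same_ob (cod1 t) (dom1 s) | _ => True end.
Definition same_hom (t t' : hterm) : Prop :=
  wf1 t /\ wf1 t' /\ forall M, eval1 M t = eval1 M t'.

Lemma eval1_bounds M t : wf1 t ->
  dom (eval1 M t) = gob M (dom1 t) /\ cod (eval1 M t) = gob M (cod1 t).
Proof.
  pose proof (mcat_ok M) as HB.
  induction t as [f|a|t IHt s IHs]; simpl; intro W.
  - split; [apply m_hdom | apply m_hcod].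
  - split; [apply (tc_id1_dom HB) | apply (tc_id1_cod HB)].
  - destruct W as [Wt [Ws E]]. destruct (IHt Wt) as [Dt Ct]. destruct (IHs Ws) as [Ds Cs].
    assert (C : cod (eval1 M t) = dom (eval1 M s)) by (rewrite Ct, Ds; apply E).
    split; [rewrite (tc_comp1_dom HB C); exact Dt | rewrite (tc_comp1_cod HB C); exact Cs].
Qed.

Fixpoint wf2 (p : cterm) : Prop :=
  match p with
  | csq _ => True | cid t => wf1 t
  | cvcomp p q => wf2 p /\ wf2 q /\ same_hom (tgt2 p) (src2 q)
  | chcomp p q => wf2 p /\ wf2 q /\ same_ob (cod1 (src2 p)) (dom1 (src2 q)) end.
Definition same_cell (p p' : cterm) : Prop :=
  wf2 p /\ wf2 p' /\ forall M, eval2 M p = eval2 M p'.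

Lemma eval2_bounds p : wf2 p -> wf1 (src2 p) /\ wf1 (tgt2 p) /\
  forall M, src (eval2 M p) = eval1 M (src2 p) /\ tgt (eval2 M p) = eval1 M (tgt2 p).
Proof.
  induction p as [x|t|p IHp q IHq|p IHp q IHq]; simpl; intro W.
  - split; [exact I|split; [exact I|]]. intro M. split; [apply m_top|apply m_bot].
  - split; [exact W|split; [exact W|]]. intro M.
    split; [apply (tc_id2_src (mcat_ok M))|apply (tc_id2_tgt (mcat_ok M))].
  - destruct W as [Wp [Wq [_ [_ E]]]].
    destruct (IHp Wp) as [Sp [Tp Fp]]. destruct (IHq Wq) as [Sq [Tq Fq]].
    split; [exact Sp|split; [exact Tq|]]. intro M. pose proof (mcat_ok M) as HB.
    destruct (Fp M) as [Ep Ep']. destruct (Fq M) as [Eq Eq'].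
    assert (C : tgt (eval2 M p) = src (eval2 M q)) by (rewrite Ep', Eq; apply E).
    split; [rewrite (tc_vcomp_src HB C); exact Ep | rewrite (tc_vcomp_tgt HB C); exact Eq'].
  - destruct W as [Wp [Wq E]].
    destruct (IHp Wp) as [Sp [Tp Fp]]. destruct (IHq Wq) as [Sq [Tq Fq]].
    assert (C : forall M, cod (src (eval2 M p)) = dom (src (eval2 M q))).
    { intro M. rewrite (proj1 (Fp M)), (proj1 (Fq M)),
        (proj2 (eval1_bounds M Sp)), (proj1 (eval1_bounds M Sq)). apply E. }
    split; [simpl; auto|split; [simpl; split; [exact Tp|split; [exact Tq|]]|]].
    + intro M. pose proof (mcat_ok M) as HB.
      rewrite <- (proj2 (eval1_bounds M Tp)), <- (proj1 (eval1_bounds M Tq)),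
        <- (proj2 (Fp M)), <- (proj2 (Fq M)), <- (tc_par_cod HB), <- (tc_par_dom HB).
      apply C.
    + intro M. pose proof (mcat_ok M) as HB.
      destruct (Fp M) as [Ep Ep']. destruct (Fq M) as [Eq Eq'].
      split; [rewrite (tc_hcomp_src HB (C M)), Ep, Eq; reflexivity
             |rewrite (tc_hcomp_tgt HB (C M)), Ep', Eq'; reflexivity].
Qed.

Lemma same_ob_refl a : same_ob a a. Proof. intro; reflexivity. Qed.
Lemma same_ob_sym a b : same_ob a b -> same_ob b a. Proof. intros H M; auto. Qed.
Lemma same_ob_trans a b c : same_ob a b -> same_ob b c -> same_ob a c.
Proof. intros H K M; rewrite H; auto. Qed.
Lemma same_hom_refl t : wf1 t -> same_hom t t. Proof. intro; repeat split; auto. Qed.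
Lemma same_hom_sym a b : same_hom a b -> same_hom b a.
Proof. intros [? [? H]]; repeat split; auto. Qed.
Lemma same_hom_trans a b c : same_hom a b -> same_hom b c -> same_hom a c.
Proof. intros [? [? H]] [? [? K]]; repeat split; auto. intro M; rewrite H; auto. Qed.
Lemma same_cell_refl t : wf2 t -> same_cell t t. Proof. intro; repeat split; auto. Qed.
Lemma same_cell_sym a b : same_cell a b -> same_cell b a.
Proof. intros [? [? H]]; repeat split; auto. Qed.
Lemma same_cell_trans a b c : same_cell a b -> same_cell b c -> same_cell a c.
Proof. intros [? [? H]] [? [? K]]; repeat split; auto. intro M; rewrite H; auto. Qed.
End Terms.

Notation cl1 t H := (@qcl _ (@same_hom _) t H).
Notation cl2 p H := (@qcl _ (@same_cell _) p H).

Section FreeTwoCat.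
Variable D : DblCat.

Definition FOb := PerQuot (@same_ob D).
Definition FHom := PerQuot (@same_hom D).
Definition FCell := PerQuot (@same_cell D).

Definition cl0 (a : dob D) : FOb := @qcl _ (@same_ob D) a (same_ob_refl a).

Lemma rep1_wf (f : FHom) : wf1 (qrep f). Proof. exact (proj1 (proj1 (qrep_spec f))). Qed.
Lemma rep2_wf (x : FCell) : wf2 (qrep x). Proof. exact (proj1 (proj1 (qrep_spec x))). Qed.
Lemma src_ok (x : FCell) : same_hom (src2 (qrep x)) (src2 (qrep x)).
Proof. apply same_hom_refl. apply (eval2_bounds (rep2_wf x)). Qed.
Lemma tgt_ok (x : FCell) : same_hom (tgt2 (qrep x)) (tgt2 (qrep x)).
Proof. apply same_hom_refl. apply (eval2_bounds (rep2_wf x)). Qed.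
Lemma tid_ok (a : dob D) : same_hom (tid a) (tid a). Proof. apply same_hom_refl. exact I. Qed.
Lemma cid_ok (f : FHom) : same_cell (cid (qrep f)) (cid (qrep f)).
Proof. apply same_cell_refl. apply rep1_wf. Qed.

(* the structure of L D, computed on representatives; a composite of non-composable
   arguments is irrelevant and defaults to the first argument *)
Definition Ldom (f : FHom) : FOb := cl0 (dom1 (qrep f)).
Definition Lcod (f : FHom) : FOb := cl0 (cod1 (qrep f)).
Definition Lsrc (x : FCell) : FHom := cl1 _ (src_ok x).
Definition Ltgt (x : FCell) : FHom := cl1 _ (tgt_ok x).
Definition Lid1 (a : FOb) : FHom := cl1 _ (tid_ok (qrep a)).
Definition Lcomp1 (f g : FHom) : FHom := qcl_or (tcomp (qrep f) (qrep g)) f.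
Definition Lid2 (f : FHom) : FCell := cl2 _ (cid_ok f).
Definition Lvcomp (x y : FCell) : FCell := qcl_or (cvcomp (qrep x) (qrep y)) x.
Definition Lhcomp (x y : FCell) : FCell := qcl_or (chcomp (qrep x) (qrep y)) x.

Definition LD : TwoCat :=
  {| ob := FOb; hom := FHom; cell := FCell; dom := Ldom; cod := Lcod; src := Lsrc;
     tgt := Ltgt; id1 := Lid1; comp1 := Lcomp1; id2 := Lid2; vcomp := Lvcomp;
     hcomp := Lhcomp |}.

Definition sem0 (M : Model D) (a : FOb) : ob (mcat M) := gob M (qrep a).
Definition sem1 (M : Model D) (f : FHom) : hom (mcat M) := eval1 M (qrep f).
Definition sem2 (M : Model D) (x : FCell) : cell (mcat M) := eval2 M (qrep x).

Lemma sem0_cl M a H : sem0 M (@qcl _ (@same_ob D) a H) = gob M a.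
Proof. apply (qrep_cl H). Qed.
Lemma sem0_cl0 M a : sem0 M (cl0 a) = gob M a. Proof. apply sem0_cl. Qed.
Lemma sem1_cl M t H : sem1 M (cl1 t H) = eval1 M t.
Proof. apply (qrep_cl H). Qed.
Lemma sem2_cl M t H : sem2 M (cl2 t H) = eval2 M t.
Proof. apply (qrep_cl H). Qed.

Lemma ext0 (a b : FOb) : (forall M, sem0 M a = sem0 M b) -> a = b.
Proof. intro H. apply (pquot_ext (@same_ob_sym D) (@same_ob_trans D)). exact H. Qed.
Lemma ext1 (a b : FHom) : (forall M, sem1 M a = sem1 M b) -> a = b.
Proof.
  intro H. apply (pquot_ext (@same_hom_sym D) (@same_hom_trans D)).
  repeat split; [apply rep1_wf|apply rep1_wf|exact H].
Qed.
Lemma ext2 (a b : FCell) : (forall M, sem2 M a = sem2 M b) -> a = b.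
Proof.
  intro H. apply (pquot_ext (@same_cell_sym D) (@same_cell_trans D)).
  repeat split; [apply rep2_wf|apply rep2_wf|exact H].
Qed.

Lemma sem_dom M f : sem0 M (Ldom f) = dom (sem1 M f).
Proof. unfold Ldom. rewrite sem0_cl0. symmetry. apply (eval1_bounds M (rep1_wf f)). Qed.
Lemma sem_cod M f : sem0 M (Lcod f) = cod (sem1 M f).
Proof. unfold Lcod. rewrite sem0_cl0. symmetry. apply (eval1_bounds M (rep1_wf f)). Qed.
Lemma sem_src M x : sem1 M (Lsrc x) = src (sem2 M x).
Proof. unfold Lsrc. rewrite sem1_cl. symmetry. apply (eval2_bounds (rep2_wf x)). Qed.
Lemma sem_tgt M x : sem1 M (Ltgt x) = tgt (sem2 M x).
Proof. unfold Ltgt. rewrite sem1_cl. symmetry. apply (eval2_bounds (rep2_wf x)). Qed.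
Lemma sem_id1 M a : sem1 M (Lid1 a) = id1 (sem0 M a).
Proof. unfold Lid1. rewrite sem1_cl. reflexivity. Qed.
Lemma sem_id2 M f : sem2 M (Lid2 f) = id2 (sem1 M f).
Proof. unfold Lid2. rewrite sem2_cl. reflexivity. Qed.

Lemma comp1_ok f g : Lcod f = Ldom g ->
  same_hom (tcomp (qrep f) (qrep g)) (tcomp (qrep f) (qrep g)).
Proof.
  intro E. apply same_hom_refl. simpl. split; [apply rep1_wf|split; [apply rep1_wf|]].
  intro M. apply (f_equal (sem0 M)) in E. unfold Ldom, Lcod in E. rewrite !sem0_cl0 in E.
  exact E.
Qed.
Lemma sem_comp1 M f g : Lcod f = Ldom g -> sem1 M (Lcomp1 f g) = comp1 (sem1 M f) (sem1 M g).
Proof. intro E. unfold Lcomp1. rewrite (qcl_or_eq _ (comp1_ok E)), sem1_cl. reflexivity. Qed.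

Lemma vcomp_ok x y : Ltgt x = Lsrc y ->
  same_cell (cvcomp (qrep x) (qrep y)) (cvcomp (qrep x) (qrep y)).
Proof.
  intro E. apply same_cell_refl. simpl. split; [apply rep2_wf|split; [apply rep2_wf|]].
  exact (qcl_inj E).
Qed.
Lemma sem_vcomp M x y : Ltgt x = Lsrc y -> sem2 M (Lvcomp x y) = vcomp (sem2 M x) (sem2 M y).
Proof. intro E. unfold Lvcomp. rewrite (qcl_or_eq _ (vcomp_ok E)), sem2_cl. reflexivity. Qed.

Lemma hcomp_ok x y : Lcod (Lsrc x) = Ldom (Lsrc y) ->
  same_cell (chcomp (qrep x) (qrep y)) (chcomp (qrep x) (qrep y)).
Proof.
  intro E. apply same_cell_refl. simpl. split; [apply rep2_wf|split; [apply rep2_wf|]].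
  intro M. apply (f_equal (sem0 M)) in E. rewrite sem_cod, sem_dom, !sem_src in E.
  destruct (eval2_bounds (rep2_wf x)) as [Sx [_ Fx]].
  destruct (eval2_bounds (rep2_wf y)) as [Sy [_ Fy]].
  unfold sem2 in E. rewrite (proj1 (Fx M)), (proj1 (Fy M)) in E.
  rewrite (proj2 (eval1_bounds M Sx)), (proj1 (eval1_bounds M Sy)) in E. exact E.
Qed.
Lemma sem_hcomp M x y : Lcod (Lsrc x) = Ldom (Lsrc y) ->
  sem2 M (Lhcomp x y) = hcomp (sem2 M x) (sem2 M y).
Proof. intro E. unfold Lhcomp. rewrite (qcl_or_eq _ (hcomp_ok E)), sem2_cl. reflexivity. Qed.

Lemma sem_composable M f g : Lcod f = Ldom g -> cod (sem1 M f) = dom (sem1 M g).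
Proof. intro E. rewrite <- sem_cod, <- sem_dom, E. reflexivity. Qed.
Lemma sem_vcomposable M x y : Ltgt x = Lsrc y -> tgt (sem2 M x) = src (sem2 M y).
Proof. intro E. rewrite <- sem_tgt, <- sem_src, E. reflexivity. Qed.
Lemma sem_hcomposable M x y : Lcod (Lsrc x) = Ldom (Lsrc y) ->
  cod (src (sem2 M x)) = dom (src (sem2 M y)).
Proof. intro E. rewrite <- !sem_src, <- sem_cod, <- sem_dom, E. reflexivity. Qed.
End FreeTwoCat.

Ltac in_all_models ext :=
  apply ext; let M := fresh "M" in intro M; pose proof (mcat_ok M) as HB.

Section FreeIsTwoCat.
Variable D : DblCat.

Lemma L_id1_dom (a : FOb D) : Ldom (Lid1 a) = a.
Proof. in_all_models ext0. rewrite sem_dom, sem_id1. apply (tc_id1_dom HB). Qed.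

Lemma L_id1_cod (a : FOb D) : Lcod (Lid1 a) = a.
Proof. in_all_models ext0. rewrite sem_cod, sem_id1. apply (tc_id1_cod HB). Qed.

Lemma L_comp1_dom (f g : FHom D) : Lcod f = Ldom g -> Ldom (Lcomp1 f g) = Ldom f.
Proof.
  intro H. in_all_models ext0. rewrite !sem_dom, (sem_comp1 M H).
  exact (tc_comp1_dom HB (sem_composable M H)).
Qed.

Lemma L_comp1_cod (f g : FHom D) : Lcod f = Ldom g -> Lcod (Lcomp1 f g) = Lcod g.
Proof.
  intro H. in_all_models ext0. rewrite !sem_cod, (sem_comp1 M H).
  exact (tc_comp1_cod HB (sem_composable M H)).
Qed.

Lemma L_comp1_id_l (f : FHom D) : Lcomp1 (Lid1 (Ldom f)) f = f.
Proof.
  assert (H : Lcod (Lid1 (Ldom f)) = Ldom f) by apply L_id1_cod.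
  in_all_models ext1. rewrite (sem_comp1 M H), sem_id1, sem_dom. apply (tc_comp1_id_l HB).
Qed.

Lemma L_comp1_id_r (f : FHom D) : Lcomp1 f (Lid1 (Lcod f)) = f.
Proof.
  assert (H : Lcod f = Ldom (Lid1 (Lcod f))) by (symmetry; apply L_id1_dom).
  in_all_models ext1. rewrite (sem_comp1 M H), sem_id1, sem_cod. apply (tc_comp1_id_r HB).
Qed.

Lemma L_comp1_assoc (f g h : FHom D) : Lcod f = Ldom g -> Lcod g = Ldom h ->
  Lcomp1 (Lcomp1 f g) h = Lcomp1 f (Lcomp1 g h).
Proof.
  intros H1 H2.
  assert (H3 : Lcod (Lcomp1 f g) = Ldom h) by (rewrite L_comp1_cod; auto).
  assert (H4 : Lcod f = Ldom (Lcomp1 g h)) by (rewrite L_comp1_dom; auto).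
  in_all_models ext1.
  rewrite (sem_comp1 M H3), (sem_comp1 M H4), (sem_comp1 M H1), (sem_comp1 M H2).
  exact (tc_comp1_assoc HB (sem_composable M H1) (sem_composable M H2)).
Qed.

Lemma L_par_dom (x : FCell D) : Ldom (Lsrc x) = Ldom (Ltgt x).
Proof. in_all_models ext0. rewrite !sem_dom, sem_src, sem_tgt. apply (tc_par_dom HB). Qed.

Lemma L_par_cod (x : FCell D) : Lcod (Lsrc x) = Lcod (Ltgt x).
Proof. in_all_models ext0. rewrite !sem_cod, sem_src, sem_tgt. apply (tc_par_cod HB). Qed.

Lemma L_id2_src (f : FHom D) : Lsrc (Lid2 f) = f.
Proof. in_all_models ext1. rewrite sem_src, sem_id2. apply (tc_id2_src HB). Qed.

Lemma L_id2_tgt (f : FHom D) : Ltgt (Lid2 f) = f.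
Proof. in_all_models ext1. rewrite sem_tgt, sem_id2. apply (tc_id2_tgt HB). Qed.

Lemma L_vcomp_src (x y : FCell D) : Ltgt x = Lsrc y -> Lsrc (Lvcomp x y) = Lsrc x.
Proof.
  intro H. in_all_models ext1. rewrite !sem_src, (sem_vcomp M H).
  exact (tc_vcomp_src HB (sem_vcomposable M H)).
Qed.

Lemma L_vcomp_tgt (x y : FCell D) : Ltgt x = Lsrc y -> Ltgt (Lvcomp x y) = Ltgt y.
Proof.
  intro H. in_all_models ext1. rewrite !sem_tgt, (sem_vcomp M H).
  exact (tc_vcomp_tgt HB (sem_vcomposable M H)).
Qed.

Lemma L_vcomp_id_l (x : FCell D) : Lvcomp (Lid2 (Lsrc x)) x = x.
Proof.
  assert (H : Ltgt (Lid2 (Lsrc x)) = Lsrc x) by apply L_id2_tgt.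
  in_all_models ext2. rewrite (sem_vcomp M H), sem_id2, sem_src. apply (tc_vcomp_id_l HB).
Qed.

Lemma L_vcomp_id_r (x : FCell D) : Lvcomp x (Lid2 (Ltgt x)) = x.
Proof.
  assert (H : Ltgt x = Lsrc (Lid2 (Ltgt x))) by (symmetry; apply L_id2_src).
  in_all_models ext2. rewrite (sem_vcomp M H), sem_id2, sem_tgt. apply (tc_vcomp_id_r HB).
Qed.

Lemma L_vcomp_assoc (x y z : FCell D) : Ltgt x = Lsrc y -> Ltgt y = Lsrc z ->
  Lvcomp (Lvcomp x y) z = Lvcomp x (Lvcomp y z).
Proof.
  intros H1 H2.
  assert (H3 : Ltgt (Lvcomp x y) = Lsrc z) by (rewrite L_vcomp_tgt; auto).
  assert (H4 : Ltgt x = Lsrc (Lvcomp y z)) by (rewrite L_vcomp_src; auto).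
  in_all_models ext2.
  rewrite (sem_vcomp M H3), (sem_vcomp M H4), (sem_vcomp M H1), (sem_vcomp M H2).
  exact (tc_vcomp_assoc HB (sem_vcomposable M H1) (sem_vcomposable M H2)).
Qed.

Lemma L_hcomp_src (x y : FCell D) : Lcod (Lsrc x) = Ldom (Lsrc y) ->
  Lsrc (Lhcomp x y) = Lcomp1 (Lsrc x) (Lsrc y).
Proof.
  intro H. in_all_models ext1. rewrite sem_src, (sem_hcomp M H), (sem_comp1 M H), !sem_src.
  exact (tc_hcomp_src HB (sem_hcomposable M H)).
Qed.

Lemma L_hcomp_tgt (x y : FCell D) : Lcod (Lsrc x) = Ldom (Lsrc y) ->
  Ltgt (Lhcomp x y) = Lcomp1 (Ltgt x) (Ltgt y).
Proof.
  intro H.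
  assert (H' : Lcod (Ltgt x) = Ldom (Ltgt y)) by (rewrite <- L_par_cod, <- L_par_dom; auto).
  in_all_models ext1. rewrite sem_tgt, (sem_hcomp M H), (sem_comp1 M H'), !sem_tgt.
  exact (tc_hcomp_tgt HB (sem_hcomposable M H)).
Qed.

Lemma L_hcomp_id_l (x : FCell D) : Lhcomp (Lid2 (Lid1 (Ldom (Lsrc x)))) x = x.
Proof.
  assert (H : Lcod (Lsrc (Lid2 (Lid1 (Ldom (Lsrc x))))) = Ldom (Lsrc x))
    by (rewrite L_id2_src; apply L_id1_cod).
  in_all_models ext2. rewrite (sem_hcomp M H), sem_id2, sem_id1, sem_dom, sem_src.
  apply (tc_hcomp_id_l HB).
Qed.

Lemma L_hcomp_id_r (x : FCell D) : Lhcomp x (Lid2 (Lid1 (Lcod (Lsrc x)))) = x.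
Proof.
  assert (H : Lcod (Lsrc x) = Ldom (Lsrc (Lid2 (Lid1 (Lcod (Lsrc x))))))
    by (rewrite L_id2_src; symmetry; apply L_id1_dom).
  in_all_models ext2. rewrite (sem_hcomp M H), sem_id2, sem_id1, sem_cod, sem_src.
  apply (tc_hcomp_id_r HB).
Qed.

Lemma L_hcomp_assoc (x y z : FCell D) : Lcod (Lsrc x) = Ldom (Lsrc y) ->
  Lcod (Lsrc y) = Ldom (Lsrc z) -> Lhcomp (Lhcomp x y) z = Lhcomp x (Lhcomp y z).
Proof.
  intros H1 H2.
  assert (H3 : Lcod (Lsrc (Lhcomp x y)) = Ldom (Lsrc z))
    by (rewrite L_hcomp_src, L_comp1_cod; auto).
  assert (H4 : Lcod (Lsrc x) = Ldom (Lsrc (Lhcomp y z)))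
    by (rewrite L_hcomp_src, L_comp1_dom; auto).
  in_all_models ext2.
  rewrite (sem_hcomp M H3), (sem_hcomp M H4), (sem_hcomp M H1), (sem_hcomp M H2).
  exact (tc_hcomp_assoc HB (sem_hcomposable M H1) (sem_hcomposable M H2)).
Qed.

Lemma L_hcomp_id2 (f g : FHom D) : Lcod f = Ldom g ->
  Lhcomp (Lid2 f) (Lid2 g) = Lid2 (Lcomp1 f g).
Proof.
  intro H.
  assert (H' : Lcod (Lsrc (Lid2 f)) = Ldom (Lsrc (Lid2 g))) by (rewrite !L_id2_src; auto).
  in_all_models ext2. rewrite (sem_hcomp M H'), !sem_id2, (sem_comp1 M H).
  exact (tc_hcomp_id2 HB (sem_composable M H)).
Qed.

Lemma L_interchange (x y z w : FCell D) : Ltgt x = Lsrc y -> Ltgt z = Lsrc w ->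
  Lcod (Lsrc x) = Ldom (Lsrc z) ->
  Lhcomp (Lvcomp x y) (Lvcomp z w) = Lvcomp (Lhcomp x z) (Lhcomp y w).
Proof.
  intros H1 H2 H3.
  assert (H4 : Lcod (Lsrc (Lvcomp x y)) = Ldom (Lsrc (Lvcomp z w)))
    by (rewrite !L_vcomp_src; auto).
  assert (H5 : Lcod (Lsrc y) = Ldom (Lsrc w))
    by (rewrite <- H1, <- H2, <- L_par_cod, <- L_par_dom; auto).
  assert (H6 : Ltgt (Lhcomp x z) = Lsrc (Lhcomp y w))
    by (rewrite L_hcomp_tgt, L_hcomp_src, H1, H2; auto).
  in_all_models ext2.
  rewrite (sem_hcomp M H4), (sem_vcomp M H1), (sem_vcomp M H2), (sem_vcomp M H6),
    (sem_hcomp M H3), (sem_hcomp M H5).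
  exact (tc_interchange HB (sem_vcomposable M H1) (sem_vcomposable M H2) (sem_hcomposable M H3)).
Qed.

Lemma LD_twocat : is_twocat (LD D).
Proof.
  constructor; simpl.
  - exact L_id1_dom. - exact L_id1_cod. - exact L_comp1_dom. - exact L_comp1_cod.
  - exact L_comp1_id_l. - exact L_comp1_id_r. - exact L_comp1_assoc.
  - exact L_par_dom. - exact L_par_cod. - exact L_id2_src. - exact L_id2_tgt.
  - exact L_vcomp_src. - exact L_vcomp_tgt. - exact L_vcomp_id_l. - exact L_vcomp_id_r.
  - exact L_vcomp_assoc. - exact L_hcomp_src. - exact L_hcomp_tgt.
  - exact L_hcomp_id_l. - exact L_hcomp_id_r. - exact L_hcomp_assoc.
  - exact L_hcomp_id2. - exact L_interchange.
Qed.
End FreeIsTwoCat.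

Section Unit.
Variable D : DblCat.

Lemma tgen_ok (f : hhom D) : same_hom (tgen f) (tgen f). Proof. apply same_hom_refl. exact I. Qed.
Lemma csq_ok (x : sq D) : same_cell (csq x) (csq x). Proof. apply same_cell_refl. exact I. Qed.

Definition eta_h (f : hhom D) : FHom D := cl1 (tgen f) (tgen_ok f).
Definition eta_sq (x : sq D) : FCell D := cl2 (csq x) (csq_ok x).
Definition eta : DblFun D (HH (LD D)) :=
  @Build_DblFun D (HH (LD D)) (fun a => cl0 a) eta_h (fun u => cl0 (vdom u)) eta_sq.

Lemma sem_eta_h M f : sem1 M (eta_h f) = ghh M f.
Proof. unfold eta_h. rewrite sem1_cl. reflexivity. Qed.

Lemma sem_eta_sq M x : sem2 M (eta_sq x) = gsq M x.
Proof. unfold eta_sq. rewrite sem2_cl. reflexivity. Qed.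

Lemma eta_h_dom f : Ldom (eta_h f) = cl0 (hdom f).
Proof. in_all_models ext0. rewrite sem_dom, sem_eta_h, sem0_cl0. apply m_hdom. Qed.

Lemma eta_h_cod f : Lcod (eta_h f) = cl0 (hcod f).
Proof. in_all_models ext0. rewrite sem_cod, sem_eta_h, sem0_cl0. apply m_hcod. Qed.

Lemma eta_sq_src x : Lsrc (eta_sq x) = eta_h (top x).
Proof. in_all_models ext1. rewrite sem_src, sem_eta_sq, sem_eta_h. apply m_top. Qed.

Lemma eta_sq_tgt x : Ltgt (eta_sq x) = eta_h (bot x).
Proof. in_all_models ext1. rewrite sem_tgt, sem_eta_sq, sem_eta_h. apply m_bot. Qed.

Lemma eta_sq_lft x : Ldom (Lsrc (eta_sq x)) = cl0 (vdom (lft x)).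
Proof. in_all_models ext0. rewrite sem_dom, sem_src, sem_eta_sq, sem0_cl0, m_lft. apply m_vdom. Qed.

Lemma eta_sq_rgt x : Lcod (Lsrc (eta_sq x)) = cl0 (vdom (rgt x)).
Proof. in_all_models ext0. rewrite sem_cod, sem_src, sem_eta_sq, sem0_cl0, m_rgt. apply m_vdom. Qed.

Lemma eta_dblfun : is_dblfun eta.
Proof.
  constructor; simpl.
  - exact eta_h_dom.
  - exact eta_h_cod.
  - reflexivity.
  - intro u. in_all_models ext0. rewrite !sem0_cl0, <- m_vdom. apply m_vcod.
  - exact eta_sq_src.
  - exact eta_sq_tgt.
  - exact eta_sq_lft.
  - exact eta_sq_rgt.
  - intro a. in_all_models ext1. rewrite sem_eta_h, sem_id1, sem0_cl0. apply m_hid.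
  - intro a. in_all_models ext0. rewrite !sem0_cl0, <- m_vdom. apply m_vid.
  - intros f g H.
    assert (E : Lcod (eta_h f) = Ldom (eta_h g)) by (rewrite eta_h_dom, eta_h_cod, H; reflexivity).
    in_all_models ext1. rewrite (sem_comp1 M E), !sem_eta_h. apply (m_hcomp1 M H).
  - intros u v H. in_all_models ext0. rewrite !sem0_cl0, <- !m_vdom. apply (m_vcomp1 M H).
  - intro f. in_all_models ext2. rewrite sem_id2, sem_eta_sq, sem_eta_h. apply m_sqidh.
  - intro u. in_all_models ext2.
    rewrite sem_id2, sem_eta_sq, sem_id1, sem0_cl0, <- m_vdom. apply m_sqidv.
  - intros x y H. assert (E : Lcod (Lsrc (eta_sq x)) = Ldom (Lsrc (eta_sq y)))
      by (rewrite eta_sq_lft, eta_sq_rgt, H; reflexivity).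
    in_all_models ext2. rewrite (sem_hcomp M E), !sem_eta_sq. apply (m_sqh M H).
  - intros x y H. assert (E : Ltgt (eta_sq x) = Lsrc (eta_sq y))
      by (rewrite eta_sq_tgt, eta_sq_src, H; reflexivity).
    in_all_models ext2. rewrite (sem_vcomp M E), !sem_eta_sq. apply (m_sqv M H).
Qed.
End Unit.

(* Classes of terms, read through the structure of L D.  These decompositions drive the
   inductions showing that a 2-functor out of L D is determined by its values on
   generators. *)
Section TermClasses.
Variable D : DblCat.

Lemma cl1_tid (a : dob D) H : cl1 (tid a) H = Lid1 (cl0 a).
Proof. in_all_models ext1. rewrite sem1_cl, sem_id1, sem0_cl0. reflexivity. Qed.

Lemma cl1_tcomp_composable (t s : hterm D) Ht Hs :
  wf1 (tcomp t s) -> Lcod (cl1 t Ht) = Ldom (cl1 s Hs).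
Proof.
  intros [Wt [Ws E]]. in_all_models ext0.
  rewrite sem_cod, sem_dom, !sem1_cl, (proj2 (eval1_bounds M Wt)), (proj1 (eval1_bounds M Ws)).
  apply E.
Qed.

Lemma cl1_tcomp (t s : hterm D) H Ht Hs : cl1 (tcomp t s) H = Lcomp1 (cl1 t Ht) (cl1 s Hs).
Proof.
  in_all_models ext1.
  rewrite (sem_comp1 M (cl1_tcomp_composable Ht Hs (proj1 H))), !sem1_cl. reflexivity.
Qed.

Lemma cl2_cid (t : hterm D) H Ht : cl2 (cid t) H = Lid2 (cl1 t Ht).
Proof. in_all_models ext2. rewrite sem2_cl, sem_id2, sem1_cl. reflexivity. Qed.

Lemma cl2_cvcomp_composable (p q : cterm D) Hp Hq :
  wf2 (cvcomp p q) -> Ltgt (cl2 p Hp) = Lsrc (cl2 q Hq).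
Proof.
  intros [Wp [Wq E]]. in_all_models ext1.
  rewrite sem_tgt, sem_src, !sem2_cl, (proj2 (proj2 (proj2 (eval2_bounds Wp)) M)),
    (proj1 (proj2 (proj2 (eval2_bounds Wq)) M)).
  apply E.
Qed.

Lemma cl2_cvcomp (p q : cterm D) H Hp Hq : cl2 (cvcomp p q) H = Lvcomp (cl2 p Hp) (cl2 q Hq).
Proof.
  in_all_models ext2.
  rewrite (sem_vcomp M (cl2_cvcomp_composable Hp Hq (proj1 H))), !sem2_cl. reflexivity.
Qed.

Lemma cl2_chcomp_composable (p q : cterm D) Hp Hq :
  wf2 (chcomp p q) -> Lcod (Lsrc (cl2 p Hp)) = Ldom (Lsrc (cl2 q Hq)).
Proof.
  intros [Wp [Wq E]]. in_all_models ext0.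
  destruct (eval2_bounds Wp) as [Sp [_ Fp]]. destruct (eval2_bounds Wq) as [Sq [_ Fq]].
  rewrite sem_cod, sem_dom, !sem_src, !sem2_cl, (proj1 (Fp M)), (proj1 (Fq M)),
    (proj2 (eval1_bounds M Sp)), (proj1 (eval1_bounds M Sq)).
  apply E.
Qed.

Lemma cl2_chcomp (p q : cterm D) H Hp Hq : cl2 (chcomp p q) H = Lhcomp (cl2 p Hp) (cl2 q Hq).
Proof.
  in_all_models ext2.
  rewrite (sem_hcomp M (cl2_chcomp_composable Hp Hq (proj1 H))), !sem2_cl. reflexivity.
Qed.
End TermClasses.

Section UniversalArrow.
Variable D : DblCat.
Variable B : TwoCat.
Variable G : DblFun D (HH B).
Hypothesis HB : is_twocat B.
Hypothesis HG : is_dblfun G.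

Definition model_of : Model D := @mkModel D B G HB HG.

Definition lift : TwoFun (LD D) B :=
  @Build_TwoFun (LD D) B (sem0 model_of) (sem1 model_of) (sem2 model_of).

Lemma lift_twofun : is_twofun lift.
Proof.
  constructor; simpl.
  - intro f. symmetry. exact (sem_dom model_of f).
  - intro f. symmetry. exact (sem_cod model_of f).
  - intro x. symmetry. exact (sem_src model_of x).
  - intro x. symmetry. exact (sem_tgt model_of x).
  - intro a. exact (sem_id1 model_of a).
  - intros f g H. exact (sem_comp1 model_of H).
  - intro f. exact (sem_id2 model_of f).
  - intros x y H. exact (sem_vcomp model_of H).
  - intros x y H. exact (sem_hcomp model_of H).
Qed.

Lemma lift_eta : dblfun_eq (dblfun_comp (HHf lift) (eta D)) G.
Proof.
  split; [|split; [|split]]; simpl.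
  - intro a. rewrite sem0_cl0. reflexivity.
  - intro f. rewrite sem_eta_h. reflexivity.
  - intro u. rewrite sem0_cl0. symmetry. apply (m_vdom model_of).
  - intro x. rewrite sem_eta_sq. reflexivity.
Qed.

Variable G' : TwoFun (LD D) B.
Hypothesis HG' : is_twofun G'.
Hypothesis G'_eta : dblfun_eq (dblfun_comp (HHf G') (eta D)) G.

Lemma agree_ob a : F_ob G' (cl0 a) = gob model_of a.
Proof. destruct G'_eta as [E _]. apply E. Qed.

Lemma agree_hom t : forall H : same_hom t t, F_hom G' (cl1 t H) = eval1 model_of t.
Proof.
  induction t as [f|a|t IHt s IHs]; intro H.
  - destruct G'_eta as [_ [E _]]. rewrite (proof_irrelevance _ H (tgen_ok f)). apply (E f).
  - rewrite cl1_tid. pose proof (tf_id1 HG' (cl0 a)) as K. simpl in K.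
    rewrite K, agree_ob. reflexivity.
  - destruct (proj1 H) as [Wt [Ws _]].
    pose proof (cl1_tcomp_composable (same_hom_refl Wt) (same_hom_refl Ws) (proj1 H)) as C.
    rewrite (cl1_tcomp H (same_hom_refl Wt) (same_hom_refl Ws)).
    pose proof (tf_comp1 HG' C) as K. simpl in K. rewrite K, IHt, IHs. reflexivity.
Qed.

Lemma agree_cell p : forall H : same_cell p p, F_cell G' (cl2 p H) = eval2 model_of p.
Proof.
  induction p as [x|t|p IHp q IHq|p IHp q IHq]; intro H.
  - destruct G'_eta as [_ [_ [_ E]]]. rewrite (proof_irrelevance _ H (csq_ok x)). apply (E x).
  - pose proof (same_hom_refl (proj1 H)) as Ht. rewrite (cl2_cid H Ht).
    pose proof (tf_id2 HG' (cl1 t Ht)) as K. simpl in K. rewrite K, agree_hom. reflexivity.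
  - destruct (proj1 H) as [Wp [Wq _]].
    pose proof (cl2_cvcomp_composable (same_cell_refl Wp) (same_cell_refl Wq) (proj1 H)) as C.
    rewrite (cl2_cvcomp H (same_cell_refl Wp) (same_cell_refl Wq)).
    pose proof (tf_vcomp HG' C) as K. simpl in K. rewrite K, IHp, IHq. reflexivity.
  - destruct (proj1 H) as [Wp [Wq _]].
    pose proof (cl2_chcomp_composable (same_cell_refl Wp) (same_cell_refl Wq) (proj1 H)) as C.
    rewrite (cl2_chcomp H (same_cell_refl Wp) (same_cell_refl Wq)).
    pose proof (tf_hcomp HG' C) as K. simpl in K. rewrite K, IHp, IHq. reflexivity.
Qed.

Lemma lift_unique : twofun_eq G' lift.
Proof.
  split; [|split]; simpl.
  - intro a. rewrite <- (qcl_rep (proj1 (qrep_spec a))) at 1.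
    unfold sem0. rewrite <- agree_ob. f_equal. unfold cl0. f_equal. apply proof_irrelevance.
  - intro f. rewrite <- (qcl_rep (proj1 (qrep_spec f))) at 1. apply agree_hom.
  - intro x. rewrite <- (qcl_rep (proj1 (qrep_spec x))) at 1. apply agree_cell.
Qed.
End UniversalArrow.

Lemma id_dblfun (D : DblCat) : is_dblfun (dblfun_id D).
Proof. constructor; simpl; intros; reflexivity. Qed.

Section Counit.
Variable A : TwoCat.
Hypothesis HA : is_twocat A.

Definition id_model : Model (HH A) := @mkModel (HH A) A (dblfun_id (HH A)) HA (id_dblfun (HH A)).

Lemma eval1_id_model (M : Model (HH A)) t : wf1 t -> ghh M (eval1 id_model t) = eval1 M t.
Proof.
  induction t as [f|a|t IHt s IHs]; simpl; intro W.
  - reflexivity.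
  - exact (m_hid M a).
  - destruct W as [Wt [Ws E]].
    assert (C : cod (eval1 id_model t) = dom (eval1 id_model s)).
    { rewrite (proj2 (eval1_bounds id_model Wt)), (proj1 (eval1_bounds id_model Ws)). apply E. }
    rewrite <- IHt, <- IHs by assumption. exact (m_hcomp1 M C).
Qed.

Lemma eval2_id_model (M : Model (HH A)) p : wf2 p -> gsq M (eval2 id_model p) = eval2 M p.
Proof.
  induction p as [x|t|p IHp q IHq|p IHp q IHq]; simpl; intro W.
  - reflexivity.
  - rewrite <- (eval1_id_model M W). exact (m_sqidh M (eval1 id_model t)).
  - destruct W as [Wp [Wq E]].
    assert (C : tgt (eval2 id_model p) = src (eval2 id_model q)).
    { rewrite (proj2 (proj2 (proj2 (eval2_bounds Wp)) id_model)),
        (proj1 (proj2 (proj2 (eval2_bounds Wq)) id_model)). apply E. }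
    rewrite <- IHp, <- IHq by assumption. exact (m_sqv M C).
  - destruct W as [Wp [Wq E]].
    destruct (eval2_bounds Wp) as [Sp [_ Fp]]. destruct (eval2_bounds Wq) as [Sq [_ Fq]].
    assert (C : cod (src (eval2 id_model p)) = dom (src (eval2 id_model q))).
    { rewrite (proj1 (Fp id_model)), (proj1 (Fq id_model)),
        (proj2 (eval1_bounds id_model Sp)), (proj1 (eval1_bounds id_model Sq)). apply E. }
    rewrite <- IHp, <- IHq by assumption. exact (m_sqh M C).
Qed.

Definition eta_twofun : TwoFun A (LD (HH A)) :=
  @Build_TwoFun A (LD (HH A)) (fun a : dob (HH A) => cl0 a) (@eta_h (HH A)) (@eta_sq (HH A)).

Lemma eta_twofun_ok : is_twofun eta_twofun.
Proof.
  pose proof (eta_dblfun (HH A)) as HE.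
  constructor; simpl.
  - exact (df_hdom HE). - exact (df_hcod HE). - exact (df_top HE). - exact (df_bot HE).
  - exact (df_hid HE). - exact (df_hcomp1 HE). - exact (df_sqidh HE).
  - exact (df_sqv HE). - exact (df_sqh HE).
Qed.

Lemma eta_sem0 (a : FOb (HH A)) : cl0 (D:=HH A) (sem0 id_model a) = a.
Proof.
  rewrite <- (qcl_rep (proj1 (qrep_spec a))) at 2. unfold cl0. f_equal. apply proof_irrelevance.
Qed.

Lemma eta_sem1 (f : FHom (HH A)) : eta_h (D:=HH A) (sem1 id_model f) = f.
Proof.
  unfold sem1. rewrite <- (qcl_rep (proj1 (qrep_spec f))) at 2.
  in_all_models ext1. rewrite sem_eta_h, sem1_cl. apply eval1_id_model. apply rep1_wf.
Qed.

Lemma eta_sem2 (x : FCell (HH A)) : eta_sq (D:=HH A) (sem2 id_model x) = x.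
Proof.
  unfold sem2. rewrite <- (qcl_rep (proj1 (qrep_spec x))) at 2.
  in_all_models ext2. rewrite sem_eta_sq, sem2_cl. apply eval2_id_model. apply rep2_wf.
Qed.

Variable eps : TwoFun (LD (HH A)) A.
Hypothesis Heps : is_twofun eps.
Hypothesis eps_eta : dblfun_eq (dblfun_comp (HHf eps) (eta (HH A))) (dblfun_id (HH A)).

Lemma counit_iso : twocat_iso eps.
Proof.
  (* by uniqueness of the universal arrow, eps is the evaluation in A *)
  destruct (lift_unique HA (id_dblfun (HH A)) Heps eps_eta) as [E0 [E1 E2]]. simpl in E0, E1, E2.
  destruct eps_eta as [Fob [Fhom [_ Fcell]]]; simpl in Fob, Fhom, Fcell.
  exists eta_twofun. split; [exact eta_twofun_ok|].
  repeat split; simpl; intro c; auto.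
  - rewrite E0. apply eta_sem0.
  - rewrite E1. apply eta_sem1.
  - rewrite E2. apply eta_sem2.
Qed.
End Counit.

Section UnitLaws.
Variable A : TwoCat.
Hypothesis HA : is_twocat A.

Lemma tgt_dom (x : cell A) : dom (tgt x) = dom (src x). Proof. symmetry; apply (tc_par_dom HA). Qed.
Lemma tgt_cod (x : cell A) : cod (tgt x) = cod (src x). Proof. symmetry; apply (tc_par_cod HA). Qed.

(* unit laws stated with the identity given up to a boundary equation, so that they can
   be used by rewriting *)
Lemma comp1_id_l_at (f : hom A) X : dom f = X -> comp1 (id1 X) f = f.
Proof. intros <-. apply (tc_comp1_id_l HA). Qed.
Lemma comp1_id_r_at (f : hom A) Y : cod f = Y -> comp1 f (id1 Y) = f.
Proof. intros <-. apply (tc_comp1_id_r HA). Qed.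
Lemma vcomp_id_l_at (x : cell A) f : src x = f -> vcomp (id2 f) x = x.
Proof. intros <-. apply (tc_vcomp_id_l HA). Qed.
Lemma vcomp_id_r_at (x : cell A) g : tgt x = g -> vcomp x (id2 g) = x.
Proof. intros <-. apply (tc_vcomp_id_r HA). Qed.
Lemma hcomp_id_l_at (x : cell A) X : dom (src x) = X -> hcomp (id2 (id1 X)) x = x.
Proof. intros <-. apply (tc_hcomp_id_l HA). Qed.
Lemma hcomp_id_r_at (x : cell A) Y : cod (src x) = Y -> hcomp x (id2 (id1 Y)) = x.
Proof. intros <-. apply (tc_hcomp_id_r HA). Qed.
End UnitLaws.

Ltac add_parallel_bounds HA := repeat match goal with x : cell _ |- _ =>
    lazymatch goal with _ : dom (tgt x) = dom (src x) |- _ => fail | _ =>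
      pose proof (tgt_dom HA x); pose proof (tgt_cod HA x) end end.

(* Solves the boundary side conditions (sources, targets, domains, codomains of composite
   cells) generated by the axioms of the 2-category HA, by normalising boundaries with the
   axioms and the boundary hypotheses in context. *)
Ltac boundary HA :=
  repeat first [
      rewrite (tc_id2_src HA) | rewrite (tc_id2_tgt HA)
    | rewrite (tc_id1_dom HA) | rewrite (tc_id1_cod HA)
    | rewrite (tgt_dom HA) | rewrite (tgt_cod HA)
    | rewrite (tc_vcomp_src HA) by boundary HA | rewrite (tc_vcomp_tgt HA) by boundary HA
    | rewrite (tc_hcomp_src HA) by boundary HA | rewrite (tc_hcomp_tgt HA) by boundary HA
    | rewrite (tc_comp1_dom HA) by boundary HA | rewrite (tc_comp1_cod HA) by boundary HA
    | rewrite (comp1_id_l_at HA) by boundary HA | rewrite (comp1_id_r_at HA) by boundary HA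
    | rewrite (tc_comp1_assoc HA) by boundary HA
    | match goal with H : src ?x = _ |- context [src ?x] => is_var x; rewrite H end
    | match goal with H : tgt ?x = _ |- context [tgt ?x] => is_var x; rewrite H end
    | match goal with H : dom ?x = _ |- context [dom ?x] => is_var x; rewrite H end
    | match goal with H : cod ?x = _ |- context [cod ?x] => is_var x; rewrite H end ];
  first [reflexivity | congruence | (add_parallel_bounds HA; congruence)].

Section Whiskering.
Variable A : TwoCat.
Hypothesis HA : is_twocat A.

Lemma whisker_r_vcomp (x y : cell A) (k : hom A) : tgt x = src y -> cod (src x) = dom k ->
  hcomp (vcomp x y) (id2 k) = vcomp (hcomp x (id2 k)) (hcomp y (id2 k)).
Proof.
  intros H1 H2. rewrite <- (tc_interchange HA) by boundary HA.
  rewrite (vcomp_id_r_at HA) by boundary HA. reflexivity.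
Qed.

Lemma whisker_l_vcomp (x y : cell A) (k : hom A) : tgt x = src y -> cod k = dom (src x) ->
  hcomp (id2 k) (vcomp x y) = vcomp (hcomp (id2 k) x) (hcomp (id2 k) y).
Proof.
  intros H1 H2. rewrite <- (tc_interchange HA) by boundary HA.
  rewrite (vcomp_id_r_at HA) by boundary HA. reflexivity.
Qed.

Lemma hcomp_whiskers_rl (x y : cell A) : cod (src x) = dom (src y) ->
  hcomp x y = vcomp (hcomp x (id2 (src y))) (hcomp (id2 (tgt x)) y).
Proof.
  intro H. rewrite <- (tc_interchange HA) by boundary HA.
  rewrite (vcomp_id_r_at HA), (vcomp_id_l_at HA) by boundary HA. reflexivity.
Qed.

Lemma hcomp_whiskers_lr (x y : cell A) : cod (src x) = dom (src y) ->
  hcomp x y = vcomp (hcomp (id2 (src x)) y) (hcomp x (id2 (tgt y))).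
Proof.
  intro H. rewrite <- (tc_interchange HA) by boundary HA.
  rewrite (vcomp_id_r_at HA), (vcomp_id_l_at HA) by boundary HA. reflexivity.
Qed.

Lemma whisker_r_comp1 (x : cell A) (g h : hom A) : cod (src x) = dom g -> cod g = dom h ->
  hcomp (hcomp x (id2 g)) (id2 h) = hcomp x (id2 (comp1 g h)).
Proof.
  intros H1 H2. rewrite (tc_hcomp_assoc HA) by boundary HA.
  rewrite (tc_hcomp_id2 HA) by boundary HA. reflexivity.
Qed.

Lemma whisker_l_comp1 (x : cell A) (f g : hom A) : cod f = dom g -> cod g = dom (src x) ->
  hcomp (id2 f) (hcomp (id2 g) x) = hcomp (id2 (comp1 f g)) x.
Proof.
  intros H1 H2. rewrite <- (tc_hcomp_assoc HA) by boundary HA.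
  rewrite (tc_hcomp_id2 HA) by boundary HA. reflexivity.
Qed.
End Whiskering.

Section Invertible.
Variable A : TwoCat.
Hypothesis HA : is_twocat A.

Lemma iso_id (f : hom A) : iso2 (id2 f).
Proof.
  exists (id2 f). rewrite (tc_id2_src HA), (tc_id2_tgt HA).
  repeat split; apply (vcomp_id_l_at HA); apply (tc_id2_src HA).
Qed.

Lemma iso_vcomp (x y : cell A) : iso2 x -> iso2 y -> tgt x = src y -> iso2 (vcomp x y).
Proof.
  intros [x' [X1 [X2 [X3 X4]]]] [y' [Y1 [Y2 [Y3 Y4]]]] E.
  exists (vcomp y' x'). split; [boundary HA|split; [boundary HA|split]].
  - rewrite (tc_vcomp_src HA E), (tc_vcomp_assoc HA) by boundary HA.
    rewrite <- (tc_vcomp_assoc HA (x:=y)) by boundary HA.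
    rewrite Y3, (vcomp_id_l_at HA) by boundary HA. exact X3.
  - rewrite (tc_vcomp_tgt HA E), (tc_vcomp_assoc HA) by boundary HA.
    rewrite <- (tc_vcomp_assoc HA (x:=x')) by boundary HA.
    rewrite X4, E, (vcomp_id_l_at HA) by boundary HA. exact Y4.
Qed.

Lemma iso_whisker_r (x : cell A) (k : hom A) :
  iso2 x -> cod (src x) = dom k -> iso2 (hcomp x (id2 k)).
Proof.
  intros [x' [X1 [X2 [X3 X4]]]] E.
  exists (hcomp x' (id2 k)). split; [boundary HA|split; [boundary HA|split]].
  - rewrite <- (whisker_r_vcomp HA) by boundary HA.
    rewrite X3, (tc_hcomp_src HA), (tc_hcomp_id2 HA), (tc_id2_src HA) by boundary HA.
    reflexivity.
  - rewrite <- (whisker_r_vcomp HA) by boundary HA.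
    rewrite X4, (tc_hcomp_tgt HA), (tc_hcomp_id2 HA), (tc_id2_tgt HA) by boundary HA.
    reflexivity.
Qed.

Lemma iso_whisker_l (x : cell A) (k : hom A) :
  iso2 x -> cod k = dom (src x) -> iso2 (hcomp (id2 k) x).
Proof.
  intros [x' [X1 [X2 [X3 X4]]]] E.
  exists (hcomp (id2 k) x'). split; [boundary HA|split; [boundary HA|split]].
  - rewrite <- (whisker_l_vcomp HA) by boundary HA.
    rewrite X3, (tc_hcomp_src HA), (tc_hcomp_id2 HA), (tc_id2_src HA) by boundary HA.
    reflexivity.
  - rewrite <- (whisker_l_vcomp HA) by boundary HA.
    rewrite X4, (tc_hcomp_tgt HA), (tc_hcomp_id2 HA), (tc_id2_tgt HA) by boundary HA.
    reflexivity.
Qed.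

Lemma right_inverse_of_whisker (α r τ : cell A) (f f' h : hom A) (X Y : ob A) :
  src α = f -> tgt α = f' -> dom f = X -> cod f = Y -> dom f' = X -> cod f' = Y ->
  dom h = Y -> cod h = X ->
  src r = comp1 f' h -> tgt r = comp1 f h -> vcomp (hcomp α (id2 h)) r = id2 (comp1 f h) ->
  src τ = comp1 h f -> tgt τ = id1 Y -> iso2 τ ->
  exists ρ, src ρ = f' /\ tgt ρ = f /\ vcomp α ρ = id2 f.
Proof.
  intros Ha1 Ha2 Hf1 Hf2 Hf1' Hf2' Hh1 Hh2 Hr1 Hr2 Hr Ht1 Ht2 [τi [Hti1 [Hti2 [_ Hti]]]].
  rewrite Ht2 in Hti1, Hti. rewrite Ht1 in Hti2.
  exists (vcomp (vcomp (hcomp (id2 f') τi) (hcomp r (id2 f))) (hcomp (id2 f) τ)).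
  split; [boundary HA|split; [boundary HA|]].
  (* interchange moves α past τi *)
  assert (K : vcomp α (hcomp (id2 f') τi) =
             vcomp (hcomp (id2 f) τi) (hcomp α (id2 (comp1 h f)))).
  { transitivity (hcomp α τi).
    - rewrite (hcomp_whiskers_rl HA (x:=α) (y:=τi)) by boundary HA.
      rewrite Hti1, Ha2, (hcomp_id_r_at HA) by boundary HA. reflexivity.
    - rewrite (hcomp_whiskers_lr HA (x:=α) (y:=τi)) by boundary HA.
      rewrite Hti2, Ha1. reflexivity. }
  rewrite <- !(tc_vcomp_assoc HA) by boundary HA. rewrite K.
  rewrite <- (whisker_r_comp1 HA (x:=α) (g:=h) (h:=f)) by boundary HA.
  rewrite (tc_vcomp_assoc HA (x:=hcomp (id2 f) τi)) by boundary HA.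
  rewrite <- (whisker_r_vcomp HA) by boundary HA.
  rewrite Hr, (tc_hcomp_id2 HA), (vcomp_id_r_at HA) by boundary HA.
  rewrite <- (whisker_l_vcomp HA) by boundary HA.
  rewrite Hti, (tc_hcomp_id2 HA), (comp1_id_r_at HA) by boundary HA. reflexivity.
Qed.

Lemma left_inverse_of_whisker (α s σ : cell A) (f f' h' : hom A) (X Y : ob A) :
  src α = f -> tgt α = f' -> dom f = X -> cod f = Y -> dom f' = X -> cod f' = Y ->
  dom h' = Y -> cod h' = X ->
  src s = comp1 h' f' -> tgt s = comp1 h' f -> vcomp s (hcomp (id2 h') α) = id2 (comp1 h' f') ->
  src σ = comp1 f' h' -> tgt σ = id1 X -> iso2 σ ->
  exists λ, src λ = f' /\ tgt λ = f /\ vcomp λ α = id2 f'.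
Proof.
  intros Ha1 Ha2 Hf1 Hf2 Hf1' Hf2' Hh1 Hh2 Hs1 Hs2 Hs Ht1 Ht2 [σi [Hti1 [Hti2 [_ Hti]]]].
  rewrite Ht2 in Hti1, Hti. rewrite Ht1 in Hti2.
  exists (vcomp (vcomp (hcomp σi (id2 f')) (hcomp (id2 f') s)) (hcomp σ (id2 f))).
  split; [boundary HA|split; [boundary HA|]].
  (* interchange moves σ past α *)
  assert (K : vcomp (hcomp σ (id2 f)) α =
             vcomp (hcomp (id2 (comp1 f' h')) α) (hcomp σ (id2 f'))).
  { transitivity (hcomp σ α).
    - rewrite (hcomp_whiskers_rl HA (x:=σ) (y:=α)) by boundary HA.
      rewrite Ht2, Ha1, (hcomp_id_l_at HA) by boundary HA. reflexivity.
    - rewrite (hcomp_whiskers_lr HA (x:=σ) (y:=α)) by boundary HA.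
      rewrite Ht1, Ha2. reflexivity. }
  rewrite !(tc_vcomp_assoc HA) by boundary HA. rewrite K.
  rewrite <- (whisker_l_comp1 HA (x:=α) (f:=f') (g:=h')) by boundary HA.
  rewrite <- (tc_vcomp_assoc HA (x:=hcomp (id2 f') s)) by boundary HA.
  rewrite <- (whisker_l_vcomp HA) by boundary HA.
  rewrite Hs, (tc_hcomp_id2 HA), (vcomp_id_l_at HA) by boundary HA.
  rewrite <- (whisker_r_vcomp HA) by boundary HA.
  rewrite Hti, (tc_hcomp_id2 HA), (comp1_id_l_at HA) by boundary HA. reflexivity.
Qed.

Lemma iso_of_invertible_composites (α γ P Q τ σ : cell A) (f f' h h' : hom A) (X Y : ob A) :
  src α = f -> tgt α = f' -> dom f = X -> cod f = Y -> dom f' = X -> cod f' = Y ->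
  src γ = h -> tgt γ = h' -> dom h = Y -> cod h = X -> dom h' = Y -> cod h' = X ->
  src P = comp1 f' h' -> tgt P = comp1 f h -> vcomp (hcomp α γ) P = id2 (comp1 f h) ->
  src Q = comp1 h' f' -> tgt Q = comp1 h f -> vcomp Q (hcomp γ α) = id2 (comp1 h' f') ->
  src τ = comp1 h f -> tgt τ = id1 Y -> iso2 τ ->
  src σ = comp1 f' h' -> tgt σ = id1 X -> iso2 σ ->
  iso2 α.
Proof.
  intros Ha1 Ha2 Hf1 Hf2 Hf1' Hf2' Hg1 Hg2 Hh1 Hh2 Hh1' Hh2' HP1 HP2 HP HQ1 HQ2 HQ
    Ht1 Ht2 Ht Hs1 Hs2 Hs.
  destruct (@right_inverse_of_whisker α (vcomp (hcomp (id2 f') γ) P) τ f f' h X Y)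
    as [ρ [Hr1 [Hr2 Hr]]]; try assumption; try (boundary HA).
  { rewrite <- (tc_vcomp_assoc HA) by boundary HA.
    rewrite <- Ha2, <- Hg1, <- (hcomp_whiskers_rl HA) by boundary HA.
    rewrite ?Ha1, ?Ha2, ?Hg1, ?Hg2. exact HP. }
  destruct (@left_inverse_of_whisker α (vcomp Q (hcomp γ (id2 f))) σ f f' h' X Y)
    as [λ [Hl1 [Hl2 Hl]]]; try assumption; try (boundary HA).
  { rewrite (tc_vcomp_assoc HA) by boundary HA.
    rewrite <- Ha1, <- Hg2, <- (hcomp_whiskers_rl HA) by boundary HA.
    rewrite ?Ha1, ?Ha2, ?Hg1, ?Hg2. exact HQ. }
  assert (E : λ = ρ).
  { transitivity (vcomp λ (vcomp α ρ)).
    - rewrite Hr, (vcomp_id_r_at HA) by boundary HA. reflexivity.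
    - rewrite <- (tc_vcomp_assoc HA), Hl, (vcomp_id_l_at HA) by boundary HA. reflexivity. }
  subst λ. exists ρ. rewrite Ha1, Ha2. repeat split; assumption.
Qed.
End Invertible.

Lemma sig_ext (X : Type) (P : X -> Prop) (a b : {x | P x}) : proj1_sig a = proj1_sig b -> a = b.
Proof. destruct a, b; simpl; intros ->. f_equal. apply proof_irrelevance. Qed.

Lemma restrict_val (X : Type) (P : X -> Prop) x d : P x -> proj1_sig (@restrict X P x d) = x.
Proof.
  intro H. unfold restrict.
  destruct (excluded_middle_informative (P x)); [reflexivity|contradiction].
Qed.

Lemma HH_globular (A : TwoCat) (x : cell A) : globular (D:=HH A) x.
Proof. unfold globular; simpl; split; reflexivity. Qed.

Section HorizontalOfHH.
Variable A : TwoCat.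
Variable HD : is_dblcat (HH A).

Lemma hor_vcomp_val (x y : cell (Hor HD)) :
  proj1_sig (vcomp (t:=Hor HD) x y) = vcomp (proj1_sig x) (proj1_sig y).
Proof. apply restrict_val. apply HH_globular. Qed.

Lemma hor_iso2 (x : cell (Hor HD)) : iso2 x <-> iso2 (proj1_sig x).
Proof.
  split.
  - intros [y [Y1 [Y2 [Y3 Y4]]]]. exists (proj1_sig y).
    apply (f_equal (@proj1_sig _ _)) in Y3. apply (f_equal (@proj1_sig _ _)) in Y4.
    rewrite hor_vcomp_val in Y3, Y4. repeat split; assumption.
  - intros [y [Y1 [Y2 [Y3 Y4]]]]. exists (exist _ y (HH_globular y)).
    split; [exact Y1|split; [exact Y2|split]]; apply sig_ext; rewrite hor_vcomp_val; assumption.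
Qed.

Lemma hor_equiv (f : hom A) : is_equiv (C:=Hor HD) f <-> is_equiv f.
Proof.
  split; intros [g [G1 [G2 [[x [X1 [X2 X3]]] [y [Y1 [Y2 Y3]]]]]]];
    exists g; (split; [exact G1|split; [exact G2|split]]).
  - exists (proj1_sig x). split; [exact X1|split; [exact X2|apply hor_iso2; exact X3]].
  - exists (proj1_sig y). split; [exact Y1|split; [exact Y2|apply hor_iso2; exact Y3]].
  - exists (exist _ x (HH_globular x)).
    split; [exact X1|split; [exact X2|apply hor_iso2; exact X3]].
  - exists (exist _ y (HH_globular y)).
    split; [exact Y1|split; [exact Y2|apply hor_iso2; exact Y3]].
Qed.
End HorizontalOfHH.

Section HorizontalOfHHFunctor.
Variables A C : TwoCat.
Variable F : TwoFun A C.
Variable HD : is_dblcat (HH A).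
Variable HE : is_dblcat (HH C).

Lemma hor_fun_cell (x : cell (Hor HD)) :
  proj1_sig (F_cell (Horf HD HE (HHf F)) x) = F_cell F (proj1_sig x).
Proof. apply restrict_val. apply HH_globular. Qed.

Lemma hor_fib : lack_fib F -> lack_fib (Horf HD HE (HHf F)).
Proof.
  intros [LF1 LF2]. split.
  - intros c b Hcb Heq. apply hor_equiv in Heq.
    destruct (LF1 c b Hcb Heq) as [a [A1 [A2 A3]]].
    exists a. split; [exact A1|split; [apply hor_equiv; exact A2|exact A3]].
  - intros c beta Hb Ib. apply hor_iso2 in Ib.
    destruct (LF2 c (proj1_sig beta) Hb Ib) as [α [A1 [A2 A3]]].
    exists (exist _ α (HH_globular α)). split; [exact A1|split; [apply hor_iso2; exact A2|]].
    apply sig_ext. rewrite hor_fun_cell. exact A3.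
Qed.

Lemma hor_biequiv : biequiv F -> biequiv (Horf HD HE (HHf F)).
Proof.
  intros [B1 [B2 B3]]. split; [|split].
  - intro b. destruct (B1 b) as [a [e [E1 [E2 E3]]]].
    exists a, e. split; [exact E1|split; [exact E2|apply hor_equiv; exact E3]].
  - intros a a' g Hg1 Hg2. destruct (B2 a a' g Hg1 Hg2) as [f [x [F1 [F2 [X1 [X2 X3]]]]]].
    exists f, (exist _ x (HH_globular x)).
    repeat split; try assumption. apply hor_iso2; exact X3.
  - intros f f' y Hd Hc Hy1 Hy2.
    destruct (B3 f f' (proj1_sig y) Hd Hc Hy1 Hy2) as [x [[X1 [X2 X3]] XU]].
    exists (exist _ x (HH_globular x)). split; [split; [exact X1|split; [exact X2|]]|].
    + apply sig_ext. rewrite hor_fun_cell. exact X3.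
    + intros x' E1 E2 E3. apply sig_ext. simpl. apply XU; try assumption.
      rewrite <- hor_fun_cell, E3. reflexivity.
Qed.
End HorizontalOfHHFunctor.

Definition vcell_cond (A : TwoCat) (s0 s1 a b : cell A) : Prop :=
  dom (src a) = dom (src b) /\ cod (src a) = cod (src b) /\
  src s0 = src a /\ tgt s0 = src b /\ src s1 = tgt a /\ tgt s1 = tgt b /\
  vcomp s0 b = vcomp a s1.

Lemma V2_HH (A : TwoCat) (s0 s1 a b : cell A) :
  V2 (D:=HH A) (@mkVQ (HH A) s0 s1 a b) <-> vcell_cond s0 s1 a b.
Proof.
  unfold V2, vcell_cond, globular; simpl. split.
  - intros [H1 [H2 [_ [_ [H3 [H4 [H5 [H6 H7]]]]]]]]. repeat split; assumption.
  - intros [H1 [H2 [H3 [H4 [H5 [H6 H7]]]]]]. repeat split; assumption.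
Qed.

Lemma vcell_cond_conjugate (A : TwoCat) (HA : is_twocat A) (s0 s1 s1i γ : cell A) :
  tgt s0 = src γ -> tgt s1 = tgt γ -> src s1i = tgt s1 -> tgt s1i = src s1 ->
  vcomp s1i s1 = id2 (tgt s1) -> vcell_cond s0 s1 (vcomp (vcomp s0 γ) s1i) γ.
Proof.
  intros H1 H2 H3 H4 H5. unfold vcell_cond.
  repeat split; try (boundary HA).
  rewrite (tc_vcomp_assoc HA), H5, (vcomp_id_r_at HA) by boundary HA. reflexivity.
Qed.

Section VerticalOfHH.
Variable A : TwoCat.
Hypothesis HA : is_twocat A.
Variable HD : is_dblcat (HH A).

Definition ver_cell (s0 s1 a b : cell A) (H : vcell_cond s0 s1 a b) : cell (Ver HD) :=
  exist _ (@mkVQ (HH A) s0 s1 a b) (proj2 (V2_HH s0 s1 a b) H).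

Lemma vcell_cond_vcomp (s0 s1 a b t0 t1 c d : cell A) :
  vcell_cond s0 s1 a b -> vcell_cond t0 t1 c d -> b = c ->
  vcell_cond (vcomp s0 t0) (vcomp s1 t1) a d.
Proof.
  intros [H1 [H2 [H3 [H4 [H5 [H6 H7]]]]]] [K1 [K2 [K3 [K4 [K5 [K6 K7]]]]]] E. subst c.
  unfold vcell_cond. repeat split; try congruence; try (boundary HA).
  rewrite (tc_vcomp_assoc HA), K7 by boundary HA.
  rewrite <- (tc_vcomp_assoc HA), H7, (tc_vcomp_assoc HA) by boundary HA. reflexivity.
Qed.

Lemma ver_vcomp_val (x y : cell (Ver HD)) : tgt x = src y ->
  proj1_sig (vcomp (t:=Ver HD) x y) =
  @mkVQ (HH A) (vcomp (vs0 (proj1_sig x)) (vs0 (proj1_sig y)))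
    (vcomp (vs1 (proj1_sig x)) (vs1 (proj1_sig y))) (va (proj1_sig x)) (vb (proj1_sig y)).
Proof.
  destruct x as [[s0 s1 a b] Hx], y as [[t0 t1 c d] Hy]. simpl. intro E.
  apply restrict_val. apply V2_HH.
  exact (vcell_cond_vcomp (proj1 (V2_HH _ _ _ _) Hx) (proj1 (V2_HH _ _ _ _) Hy) E).
Qed.

Lemma ver_iso2_components (x : cell (Ver HD)) :
  iso2 x -> iso2 (vs0 (proj1_sig x)) /\ iso2 (vs1 (proj1_sig x)).
Proof.
  intros [y [Y1 [Y2 [Y3 Y4]]]].
  pose proof (f_equal (@proj1_sig _ _) Y3) as Z3. pose proof (f_equal (@proj1_sig _ _) Y4) as Z4.
  rewrite ver_vcomp_val in Z3, Z4 by congruence. clear Y3 Y4.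
  destruct x as [[s0 s1 a b] Hx], y as [[t0 t1 c d] Hy]. simpl in *. subst c d.
  apply V2_HH in Hx. apply V2_HH in Hy.
  destruct Hx as [_ [_ [H3 [H4 [H5 [H6 _]]]]]]. destruct Hy as [_ [_ [K3 [K4 [K5 [K6 _]]]]]].
  injection Z3 as E1 E2. injection Z4 as F1 F2.
  split; [exists t0|exists t1]; repeat split; congruence.
Qed.

Lemma ver_iso2_of_components (x : cell (Ver HD)) :
  iso2 (vs0 (proj1_sig x)) -> iso2 (vs1 (proj1_sig x)) -> iso2 x.
Proof.
  destruct x as [[s0 s1 a b] Hx]. simpl.
  intros [t0 [T1 [T2 [T3 T4]]]] [t1 [U1 [U2 [U3 U4]]]].
  pose proof Hx as Hx'. apply V2_HH in Hx'. destruct Hx' as [H1 [H2 [H3 [H4 [H5 [H6 H7]]]]]].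
  assert (Hy : vcell_cond t0 t1 b a).
  { unfold vcell_cond. repeat split; try congruence.
    transitivity (vcomp t0 (vcomp a (vcomp s1 t1))).
    { rewrite U3, (vcomp_id_r_at HA) by boundary HA. reflexivity. }
    rewrite <- (tc_vcomp_assoc HA (x:=a)), <- H7 by boundary HA.
    rewrite (tc_vcomp_assoc HA (x:=s0)) by boundary HA.
    rewrite <- (tc_vcomp_assoc HA (x:=t0)), T4, (vcomp_id_l_at HA) by boundary HA.
    reflexivity. }
  exists (ver_cell Hy). split; [reflexivity|split; [reflexivity|split]].
  - apply sig_ext. rewrite ver_vcomp_val by reflexivity. simpl.
    rewrite T3, U3, H3, H5. reflexivity.
  - apply sig_ext. rewrite ver_vcomp_val by reflexivity. simpl.
    rewrite T4, U4, H4, H6. reflexivity.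
Qed.

(* An invertible α whose target is an equivalence is an equivalence in V (HH A): its
   quasi-inverse is the identity 2-cell on a quasi-inverse g of tgt α. *)
Lemma ver_equiv_intro (α : cell A) : iso2 α -> is_equiv (tgt α) -> is_equiv (C:=Ver HD) α.
Proof.
  intros Hi [g [G1 [G2 [[u [U1 [U2 U3]]] [v [V1 [V2' V3]]]]]]].
  exists (id2 g). split; [simpl; boundary HA|split; [simpl; boundary HA|split]].
  - assert (Hq : vcell_cond (vcomp (hcomp α (id2 g)) u) u (hcomp α (id2 g))
                            (id2 (id1 (dom (src α))))).
    { unfold vcell_cond. repeat split; try (boundary HA).
      rewrite (vcomp_id_r_at HA) by boundary HA. reflexivity. }
    exists (ver_cell Hq). split; [reflexivity|split; [reflexivity|]].
    apply ver_iso2_of_components; simpl; [|exact U3].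
    apply (iso_vcomp HA); [apply (iso_whisker_r HA); [exact Hi|boundary HA]|exact U3|boundary HA].
  - assert (Hq : vcell_cond (vcomp (hcomp (id2 g) α) v) v (hcomp (id2 g) α)
                            (id2 (id1 (cod (src α))))).
    { unfold vcell_cond. repeat split; try (boundary HA).
      rewrite (vcomp_id_r_at HA) by boundary HA. reflexivity. }
    exists (ver_cell Hq). split; [reflexivity|split; [reflexivity|]].
    apply ver_iso2_of_components; simpl; [|exact V3].
    apply (iso_vcomp HA); [apply (iso_whisker_l HA); [exact Hi|boundary HA]|exact V3|boundary HA].
Qed.

(* Conversely, an equivalence β of V (HH A), with quasi-inverse g, is invertible and its
   target is an equivalence: the unit and counit 2-cells (s0, s1), (t0, t1) of V (HH A)
   exhibit tgt g as a quasi-inverse of tgt β and make β g and g β invertible. *)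
Lemma ver_equiv_elim (β : cell A) : is_equiv (C:=Ver HD) β -> is_equiv (tgt β) /\ iso2 β.
Proof.
  intros [g [G1 [G2 [[x [X1 [X2 X3]]] [y [Y1 [Y2 Y3]]]]]]]. simpl in G1, G2.
  destruct (ver_iso2_components X3) as [Is0 Is1].
  destruct (ver_iso2_components Y3) as [It0 It1].
  clear X3 Y3. destruct x as [[s0 s1 a b] Hx]. destruct y as [[t0 t1 c d] Hy].
  simpl in *. subst a b c d.
  apply V2_HH in Hx. apply V2_HH in Hy.
  destruct Hx as [H1 [H2 [H3 [H4 [H5 [H6 H7]]]]]].
  destruct Hy as [K1 [K2 [K3 [K4 [K5 [K6 K7]]]]]].
  rewrite (vcomp_id_r_at HA) in H7, K7 by boundary HA.
  pose proof Is0 as [s0i [S1 [S2 [S3 _]]]]. pose proof It0 as [t0i [T1 [T2 [_ T4]]]].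
  pose proof Is1 as [s1i [R1 [R2 _]]]. pose proof It1 as [t1i [Q1 [Q2 [Q3 _]]]].
  split.
  - exists (tgt g). split; [boundary HA|split; [boundary HA|split]].
    + exists s1. split; [boundary HA|split; [boundary HA|exact Is1]].
    + exists t1. split; [boundary HA|split; [boundary HA|exact It1]].
  - apply (@iso_of_invertible_composites A HA β g (vcomp s1 s0i) (vcomp t1 t0i) t0 s1
       (src β) (tgt β) (src g) (tgt g) (dom (src β)) (cod (src β)));
      try reflexivity; try assumption; try (boundary HA).
    + (* β g = s0 ; s1^-1 *)
      rewrite <- (tc_vcomp_assoc HA), <- H7, S3, H3 by boundary HA. f_equal. boundary HA.
    + (* g β = t0 ; t1^-1 *)
      assert (E : hcomp g β = vcomp t0 t1i).
      { rewrite K7, (tc_vcomp_assoc HA), Q3, (vcomp_id_r_at HA) by boundary HA. reflexivity. }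
      rewrite E, (tc_vcomp_assoc HA) by boundary HA.
      rewrite <- (tc_vcomp_assoc HA (x:=t0i)), T4, (vcomp_id_l_at HA), Q3 by boundary HA.
      f_equal. boundary HA.
Qed.
End VerticalOfHH.

Section VerticalOfHHFunctor.
Variables A C : TwoCat.
Hypothesis HA : is_twocat A.
Hypothesis HC : is_twocat C.
Variable F : TwoFun A C.
Hypothesis HF : is_twofun F.
Variable HD : is_dblcat (HH A).
Variable HE : is_dblcat (HH C).

Lemma vcell_cond_map (s0 s1 a b : cell A) : vcell_cond s0 s1 a b ->
  vcell_cond (F_cell F s0) (F_cell F s1) (F_cell F a) (F_cell F b).
Proof.
  intros [H1 [H2 [H3 [H4 [H5 [H6 H7]]]]]]. unfold vcell_cond.
  rewrite !(tf_src HF), !(tf_tgt HF), !(tf_dom HF), !(tf_cod HF).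
  repeat split; try congruence.
  rewrite <- !(tf_vcomp HF) by congruence. rewrite H7. reflexivity.
Qed.

Lemma ver_fun_cell (x : cell (Ver HD)) : proj1_sig (F_cell (Verf HD HE (HHf F)) x) =
  @mkVQ (HH C) (F_cell F (vs0 (proj1_sig x))) (F_cell F (vs1 (proj1_sig x)))
        (F_cell F (va (proj1_sig x))) (F_cell F (vb (proj1_sig x))).
Proof.
  destruct x as [[s0 s1 a b] Hx]. simpl. apply restrict_val. apply V2_HH.
  apply vcell_cond_map. apply V2_HH. exact Hx.
Qed.

(* equivalences of V (HH C) lift: lift the target equivalence, then the invertible cell *)
Lemma ver_lift_equiv : lack_fib F ->
  forall (c : ob (Ver HD)) (b : hom (Ver HE)), cod b = F_ob (Verf HD HE (HHf F)) c ->
  is_equiv b -> exists a : hom (Ver HD),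
    cod a = c /\ is_equiv a /\ F_hom (Verf HD HE (HHf F)) a = b.
Proof.
  intros [LF1 LF2]. simpl. intros c b Hcb Heq.
  destruct (ver_equiv_elim HC Heq) as [Eq Ib].
  destruct (LF1 c (tgt b)) as [f' [Hf1 [Hf2 Hf3]]]; [rewrite (tgt_cod HC); exact Hcb|exact Eq|].
  destruct (LF2 f' b) as [α [Ha1 [Ha2 Ha3]]]; [congruence|exact Ib|].
  exists α. split; [|split].
  - rewrite <- (tgt_cod HA), Ha1. exact Hf1.
  - apply (ver_equiv_intro HA HD Ha2). rewrite Ha1. exact Hf2.
  - exact Ha3.
Qed.

(* invertible 2-cells (s0, s1) of V (HH C) lift: lift s0 and s1, and conjugate *)
Lemma ver_lift_iso2 : lack_fib F ->
  forall (γ : hom (Ver HD)) (beta : cell (Ver HE)),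
  tgt beta = F_hom (Verf HD HE (HHf F)) γ -> iso2 beta ->
  exists alpha : cell (Ver HD),
    tgt alpha = γ /\ iso2 alpha /\ F_cell (Verf HD HE (HHf F)) alpha = beta.
Proof.
  intros [_ LF2] γ beta Hb Ib.
  destruct (ver_iso2_components HC Ib) as [I0 I1].
  destruct beta as [[s0 s1 b b'] Hbeta]. simpl in Hb, I0, I1. subst b'.
  pose proof Hbeta as Hb'. apply V2_HH in Hb'.
  destruct Hb' as [H1 [H2 [H3 [H4 [H5 [H6 H7]]]]]].
  destruct (LF2 (src γ) s0) as [x0 [X1 [X2 X3]]]; [rewrite H4; apply (tf_src HF)|exact I0|].
  destruct (LF2 (tgt γ) s1) as [x1 [Y1 [Y2 Y3]]]; [rewrite H6; apply (tf_tgt HF)|exact I1|].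
  pose proof Y2 as [x1i [Z1 [Z2 [Z3 Z4]]]].
  assert (Hq : vcell_cond x0 x1 (vcomp (vcomp x0 γ) x1i) γ).
  { apply (vcell_cond_conjugate HA); congruence. }
  exists (ver_cell HD Hq). split; [reflexivity|split].
  - apply (ver_iso2_of_components HA); simpl; assumption.
  - apply sig_ext. rewrite ver_fun_cell. simpl. rewrite X3, Y3. f_equal.
    (* F (x0 ; γ ; x1^-1) = s0 ; F γ ; s1^-1 = b ; s1 ; s1^-1 = b *)
    rewrite !(tf_vcomp HF) by boundary HA. rewrite X3, H7, <- Y3.
    assert (E1 : tgt b = src (F_cell F x1)) by (rewrite Y3; symmetry; exact H5).
    assert (E2 : tgt (F_cell F x1) = src (F_cell F x1i))
      by (rewrite (tf_src HF), (tf_tgt HF); congruence).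
    rewrite (tc_vcomp_assoc HC E1 E2), <- (tf_vcomp HF) by congruence.
    rewrite Z3, (tf_id2 HF). apply (vcomp_id_r_at HC). rewrite E1. apply (tf_src HF).
Qed.

Lemma ver_fib : lack_fib F -> lack_fib (Verf HD HE (HHf F)).
Proof. intro Hl. split; [exact (ver_lift_equiv Hl)|exact (ver_lift_iso2 Hl)]. Qed.

Local Notation VF := (Verf HD HE (HHf F)).

(* every object of V (HH C) (an object of C) is equivalent to one in the image: use the
   identity 2-cell on an equivalence supplied by F *)
Lemma ver_biequiv_ob : biequiv F -> forall b : ob (Ver HE),
  exists (a : ob (Ver HD)) (e : hom (Ver HE)), dom e = F_ob VF a /\ cod e = b /\ is_equiv e.
Proof.
  intros [B1 _] b. destruct (B1 b) as [a [e [E1 [E2 E3]]]].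
  exists a, (id2 e). simpl. rewrite (tc_id2_src HC).
  split; [exact E1|split; [exact E2|]].
  apply (ver_equiv_intro HC HE). apply (iso_id HC). rewrite (tc_id2_tgt HC). exact E3.
Qed.

(* a 1-cell γ of V (HH C) is isomorphic to the image of a 2-cell α of A: lift src γ and
   tgt γ up to invertible s0, s1, and take α over the conjugate s0 ; γ ; s1^-1 *)
Lemma ver_biequiv_hom : biequiv F -> forall (a a' : ob (Ver HD)) (γ : hom (Ver HE)),
  dom γ = F_ob VF a -> cod γ = F_ob VF a' ->
  exists (α : hom (Ver HD)) (x : cell (Ver HE)),
    dom α = a /\ cod α = a' /\ src x = F_hom VF α /\ tgt x = γ /\ iso2 x.
Proof.
  intros [_ [B2 B3]]. simpl. intros a a' γ Hg1 Hg2.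
  destruct (B2 a a' (src γ) Hg1 Hg2) as [f [s0 [F1 [F2 [S1 [S2 I0]]]]]].
  destruct (B2 a a' (tgt γ)) as [f' [s1 [F1' [F2' [T1 [T2 I1]]]]]];
    [rewrite (tgt_dom HC); exact Hg1|rewrite (tgt_cod HC); exact Hg2|].
  pose proof I1 as [s1i [Z1 [Z2 [Z3 Z4]]]].
  assert (Hd : dom f = dom f') by congruence. assert (Hc : cod f = cod f') by congruence.
  destruct (B3 f f' (vcomp (vcomp s0 γ) s1i) Hd Hc) as [α [[A1 [A2 A3]] _]];
    [boundary HC|boundary HC|].
  assert (Hq : vcell_cond s0 s1 (F_cell F α) γ).
  { rewrite A3. apply (vcell_cond_conjugate HC); congruence. }
  exists α, (ver_cell HE Hq). simpl.
  split; [congruence|split; [congruence|split; [reflexivity|split; [reflexivity|]]]].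
  apply (ver_iso2_of_components HC); simpl; assumption.
Qed.

(* 2-cells (t0, t1) : F α => F α' of V (HH C) lift uniquely: lift t0 and t1 by full
   faithfulness of F, which also forces the lifted pair to satisfy the commutation *)
Lemma ver_biequiv_cell : biequiv F -> forall (α α' : hom (Ver HD)) (y : cell (Ver HE)),
  dom α = dom α' -> cod α = cod α' -> src y = F_hom VF α -> tgt y = F_hom VF α' ->
  exists x : cell (Ver HD), (src x = α /\ tgt x = α' /\ F_cell VF x = y) /\
    forall x' : cell (Ver HD), src x' = α -> tgt x' = α' -> F_cell VF x' = y -> x' = x.
Proof.
  intros [_ [_ B3]] α α' y Hd Hc Hy1 Hy2. simpl in Hd, Hc.
  destruct y as [[t0 t1 c d] Hy]. simpl in Hy1, Hy2. subst c d.
  pose proof Hy as Hy'. apply V2_HH in Hy'.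
  destruct Hy' as [H1 [H2 [H3 [H4 [H5 [H6 H7]]]]]].
  rewrite (tf_src HF) in H3, H4. rewrite (tf_tgt HF) in H5, H6.
  destruct (B3 (src α) (src α') t0 Hd Hc H3 H4) as [x0 [[X1 [X2 X3]] XU]].
  assert (Hd' : dom (tgt α) = dom (tgt α')) by (rewrite !(tgt_dom HA); exact Hd).
  assert (Hc' : cod (tgt α) = cod (tgt α')) by (rewrite !(tgt_cod HA); exact Hc).
  destruct (B3 (tgt α) (tgt α') t1 Hd' Hc' H5 H6) as [x1 [[Y1 [Y2 Y3]] YU]].
  (* both sides of the commutation map to t0 ; F α' = F α ; t1, so they agree *)
  assert (Hcomm : vcomp x0 α' = vcomp α x1).
  { assert (Hd2 : dom (src α) = dom (tgt α')) by (rewrite (tgt_dom HA); exact Hd).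
    assert (Hc2 : cod (src α) = cod (tgt α')) by (rewrite (tgt_cod HA); exact Hc).
    assert (Ks : src (vcomp t0 (F_cell F α')) = F_hom F (src α)).
    { rewrite (tc_vcomp_src HC); [exact H3|rewrite H4, (tf_src HF); reflexivity]. }
    assert (Kt : tgt (vcomp t0 (F_cell F α')) = F_hom F (tgt α')).
    { rewrite (tc_vcomp_tgt HC); [apply (tf_tgt HF)|rewrite H4, (tf_src HF); reflexivity]. }
    destruct (B3 (src α) (tgt α') (vcomp t0 (F_cell F α')) Hd2 Hc2 Ks Kt) as [z [_ ZU]].
    rewrite (ZU (vcomp x0 α')), (ZU (vcomp α x1)); try reflexivity; try (boundary HA).
    - rewrite (tf_vcomp HF), Y3, H7 by congruence. reflexivity.
    - rewrite (tf_vcomp HF), X3 by congruence. reflexivity. }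
  assert (Hq : vcell_cond x0 x1 α α') by (repeat split; assumption).
  exists (ver_cell HD Hq). split; [split; [reflexivity|split; [reflexivity|]]|].
  - apply sig_ext. rewrite ver_fun_cell. simpl. rewrite X3, Y3. reflexivity.
  - intros x' E1 E2 E3.
    pose proof (f_equal (@proj1_sig _ _) E3) as E4. rewrite ver_fun_cell in E4. clear E3.
    destruct x' as [[u0 u1 c d] Hx']. simpl in E1, E2, E4. subst c d.
    injection E4 as U0 U1. pose proof (proj1 (V2_HH (A:=A) _ _ _ _) Hx') as Hx_cond.
    destruct Hx_cond as [_ [_ [G3 [G4 [G5 [G6 _]]]]]].
    apply sig_ext. simpl. f_equal; [apply XU|apply YU]; assumption.
Qed.

Lemma ver_biequiv : biequiv F -> biequiv VF.
Proof.
  intro Hb.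
  split; [exact (ver_biequiv_ob Hb)|].
  split; [exact (ver_biequiv_hom Hb)|exact (ver_biequiv_cell Hb)].
Qed.
End VerticalOfHHFunctor.

Lemma HH_right_quillen (A B : TwoCat) (F : TwoFun A B) :
  is_twocat A -> is_twocat B -> is_twofun F ->
  (lack_fib F -> dbl_fib (HHf F)) /\
  (lack_fib F -> biequiv F -> dbl_fib (HHf F) /\ dbl_we (HHf F)).
Proof.
  intros HA HB HF.
  assert (Hfib : lack_fib F -> dbl_fib (HHf F)).
  { intros Hl HD HE. split; [exact (hor_fib HD HE Hl)|exact (ver_fib HA HB HF HD HE Hl)]. }
  split; [exact Hfib|].
  intros Hl Hb. split; [exact (Hfib Hl)|].
  intros HD HE. split; [exact (hor_biequiv HD HE Hb)|exact (ver_biequiv HA HB HF HD HE Hb)].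
Qed.

Theorem theorem6p4 :
  exists (L : DblCat -> TwoCat) (eta : forall D : DblCat, DblFun D (HH (L D))),
    (forall D : DblCat, is_dblcat D ->
       is_twocat (L D) /\ is_dblfun (eta D) /\
       forall (B : TwoCat) (G : DblFun D (HH B)), is_twocat B -> is_dblfun G ->
         exists G' : TwoFun (L D) B,
           (is_twofun G' /\ dblfun_eq (dblfun_comp (HHf G') (eta D)) G) /\
           forall G'' : TwoFun (L D) B, is_twofun G'' ->
             dblfun_eq (dblfun_comp (HHf G'') (eta D)) G -> twofun_eq G'' G') /\
    (forall (A B : TwoCat) (F : TwoFun A B), is_twocat A -> is_twocat B -> is_twofun F ->
       (lack_fib F -> dbl_fib (HHf F)) /\
       (lack_fib F -> biequiv F -> dbl_fib (HHf F) /\ dbl_we (HHf F))) /\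
    (forall (A : TwoCat) (eps : TwoFun (L (HH A)) A), is_twocat A -> is_twofun eps ->
       dblfun_eq (dblfun_comp (HHf eps) (eta (HH A))) (dblfun_id (HH A)) ->
       twocat_iso eps).
Proof.
  exists LD, eta. split; [|split].
  -
    intros D _. split; [exact (LD_twocat D)|split; [exact (eta_dblfun D)|]].
    intros B G HB HG. exists (lift HB HG).
    split; [split; [exact (lift_twofun HB HG)|exact (lift_eta HB HG)]|].
    intros G' HG' HG'_eta. exact (lift_unique HB HG HG' HG'_eta).
  - exact HH_right_quillen.
  - intros A eps HA Heps Heps_eta. exact (counit_iso HA Heps Heps_eta).
Qed.
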